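(* Suppose there exists a positive integer $n$ such that $[n]$ admits no $3$-good partition, and let $n$ be the smallest such integer. Then $n\ge 845$, and $n$ belongs to the set $$N_o=\{n: n\equiv 2 \pmod 3\}\cap\{n : 3^t+1<n<(3^{t+1}+1)/2 \text{ for some integer } t\ge 4\}.$$
   Context: A partition of $[n]=\{1,\dots,n\}$ into nonempty parts is called $3$-good if every part has at most $3$ elements and the sum of the elements of every part is a power of $3$, i.e. equals $3^s$ for some integer $s\ge 0$ (so the singleton $\{1\}$ is allowed). The bound $n\ge 845$ rests on a computer verification that $[n]$ admits a $3$-good partition for all $n\le 844$. *)

From mathcomp Require Import all_boot.
Set Implicit Arguments. Unset Strict Implicit. Unset Printing Implicit Defensive.

(* [n] = {1,...,n} is represented as the subset of 'I_n.+1 of nonzero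
   ordinals, so every element carries its actual numerical value. *)
Definition segment (n : nat) : {set 'I_n.+1} := [set i : 'I_n.+1 | 0 < i].

Definition three_good (n : nat) (P : {set {set 'I_n.+1}}) : Prop :=
  partition P (segment n) /\
  forall B, B \in P -> #|B| <= 3 /\ exists s : nat, \sum_(i in B) (i : nat) = 3 ^ s.

Definition has_three_good_partition (n : nat) : Prop :=
  exists P : {set {set 'I_n.+1}}, three_good P.

From mathcomp Require Import all_boot zify.
From Stdlib Require Import BinNat.

Set Implicit Arguments.
Unset Strict Implicit.
Unset Printing Implicit Defensive.

(* Let n be a minimal counterexample and 3^t <= n < 3^(t+1).  It suffices to split
   {m+1, ..., n} into good blocks for some m < n, as [m] is partitionable by minimality.
   If 2n > 3^(t+1), the pairs {k, 3^(t+1) - k} do this.  Otherwise n = 3^t + d with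
   2d < 3^t: the pairs {k, 3^t - k} cover d < k < 3^t - d, and for d = 0, 1 (mod 3)
   explicit triples summing to 3^(t+1), together with {3^t} when 3 | d, cover
   [3^t - d, 3^t + d].  Hence d = 2 (mod 3), i.e. n lies in N_o, and for n <= 844 such
   a split is provided by a computer-found certificate that is checked by evaluation. *)

Definition good_block (p : seq nat) := 0 < size p <= 3 /\ exists s, sumn p = 3 ^ s.

Definition good_split (a c : nat) (L : seq (seq nat)) :=
  perm_eq (flatten L) (iota a c) /\ {in L, forall p, good_block p}.

Lemma good_split_cat a c d L T :
  good_split a c L -> good_split (a + c) d T -> good_split a (c + d) (L ++ T).
Proof.
move=> [permL goodL] [permT goodT]; split; first by rewrite flatten_cat iotaD perm_cat.
by move=> p; rewrite mem_cat => /orP[/goodL|/goodT].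
Qed.

Lemma good_split_of_cover a c L :
  (forall x, a <= x < a + c -> x \in flatten L) -> size (flatten L) <= c ->
  {in L, forall p, good_block p} -> good_split a c L.
Proof.
move=> cover sizeL goodL; split => //.
have sub : {subset iota a c <= flatten L} by move=> x; rewrite mem_iota; exact: cover.
have sizeL' : size (flatten L) <= size (iota a c) by rewrite size_iota.
have [eq_size eqL] := uniq_min_size (iota_uniq a c) sub sizeL'.
have uL : uniq (flatten L) by rewrite -(eq_uniq eq_size eqL) iota_uniq.
by rewrite perm_sym; exact: uniq_perm (iota_uniq a c) uL eqL.
Qed.

Lemma size_flatten_map_const (T U : Type) (f : U -> seq T) s k :
  (forall u, size (f u) = k) -> size (flatten (map f s)) = k * size s.
Proof. by move=> sizef; elim: s => [|u s IH] /=; rewrite ?muln0 // size_cat IH sizef mulnS. Qed.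

Lemma uniq_flatten_mem_eq (T : eqType) (L : seq (seq T)) p q x :
  uniq (flatten L) -> p \in L -> q \in L -> x \in p -> x \in q -> p = q.
Proof.
elim: L => //= r L IH; rewrite cat_uniq => /and3P [_ rL uL].
have disj s : s \in L -> x \in s -> x \in r -> False.
  by move=> sL xs xr; case/negP: rL; apply/hasP; exists x => //; apply/flattenP; exists s.
rewrite !inE => /predU1P [->|pL] /predU1P [->|qL] xp xq //.
- by case: (disj _ qL xq xp).
- by case: (disj _ pL xp xq).
- exact: IH.
Qed.

Lemma uniq_flatten_mem (T : eqType) (L : seq (seq T)) p :
  uniq (flatten L) -> p \in L -> uniq p.
Proof.
elim: L => //= r L IH; rewrite cat_uniq => /and3P [ur _ uL].
by rewrite inE => /predU1P [-> // | /(IH uL)].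
Qed.

Section SegmentBlocks.
Variable n : nat.

Definition block_values (B : {set 'I_n.+1}) : seq nat := [seq val i | i <- enum B].
Definition block_of_values (p : seq nat) : {set 'I_n.+1} := [set i : 'I_n.+1 | val i \in p].

Lemma sum_block_values (B : {set 'I_n.+1}) : \sum_(i in B) (i : nat) = sumn (block_values B).
Proof. by rewrite /block_values sumnE big_map big_enum. Qed.

Lemma size_block_values (B : {set 'I_n.+1}) : size (block_values B) = #|B|.
Proof. by rewrite /block_values size_map cardE. Qed.

Lemma block_of_valuesK p :
  uniq p -> {in p, forall x, x <= n} -> perm_eq (block_values (block_of_values p)) p.
Proof.
move=> up small; apply: uniq_perm => //.
  by rewrite map_inj_uniq ?enum_uniq //; exact: val_inj.
move=> x; apply/mapP/idP => [[i] | xp].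
  by rewrite mem_enum inE => ip ->.
have xn : x < n.+1 by rewrite ltnS small.
by exists (Ordinal xn); rewrite ?mem_enum ?inE.
Qed.

Lemma card_segment : #|segment n| = n.
Proof.
have -> : segment n = [set~ ord0] by apply/setP => i; rewrite !inE lt0n.
by rewrite cardsC1 card_ord.
Qed.

End SegmentBlocks.

Lemma three_good_partition_of_split n L : good_split 1 n L -> has_three_good_partition n.
Proof.
case=> permL goodL.
have uL : uniq (flatten L) by rewrite (perm_uniq permL) iota_uniq.
have inL p x : p \in L -> x \in p -> 0 < x <= n.
  move=> pL xp; have : x \in flatten L by apply/flattenP; exists p.
  by rewrite (perm_mem permL) mem_iota; lia.
pose P := [set B : {set 'I_n.+1} | has (fun p => B == block_of_values n p) L].
have PP B : B \in P -> exists2 p, p \in L & B = block_of_values n p.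
  by rewrite inE => /hasP [p pL /eqP ->]; exists p.
exists P; split.
  apply/and3P; split.
  - apply/eqP/setP => i; rewrite inE; apply/bigcupP/idP => [[B /PP [p pL ->]] | i0].
      by rewrite inE => /(inL _ _ pL) /andP [].
    have : val i \in flatten L by rewrite (perm_mem permL) mem_iota /= add1n ltn_ord i0.
    case/flattenP => p pL ip; exists (block_of_values n p); last by rewrite inE.
    by rewrite inE; apply/hasP; exists p.
  - apply/trivIsetP => A B /PP [p pL ->] /PP [q qL ->] neq.
    rewrite -setI_eq0; apply/eqP/setP => i; rewrite !inE.
    apply/negP => /andP [ip iq].
    by case/eqP: neq; rewrite (uniq_flatten_mem_eq uL pL qL ip iq).
  - apply/negP => /PP [[|x p] pL e]; first by case: (goodL _ pL) => /andP [].
    have /andP [_ xn] := inL _ x pL (mem_head _ _).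
    have : Ordinal (xn : x < n.+1) \in (set0 : {set 'I_n.+1}) by rewrite e inE mem_head.
    by rewrite inE.
move=> B /PP [p pL ->].
have small : {in p, forall x, x <= n} by move=> x /(inL _ _ pL) /andP [].
have perm_p := block_of_valuesK (uniq_flatten_mem uL pL) small.
case: (goodL p pL) => /andP [_ size_p] [s sum_p].
split; first by rewrite -size_block_values (perm_size perm_p).
by exists s; rewrite sum_block_values (perm_sumn perm_p).
Qed.

Lemma split_of_three_good_partition n :
  has_three_good_partition n -> exists L, good_split 1 n L.
Proof.
case=> P [/and3P [/eqP coverP trivP P0] goodP].
exists [seq block_values B | B <- enum P]; apply: good_split_of_cover.
- move=> x /andP [x1 xn]; have xn' : x < n.+1 by lia.
  have : Ordinal xn' \in cover P by rewrite coverP inE.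
  case/bigcupP => B BP xB; apply/flatten_mapP; exists B; first by rewrite mem_enum.
  by apply/mapP; exists (Ordinal xn'); rewrite ?mem_enum.
- rewrite size_flatten /shape -map_comp sumnE big_map big_enum.
  under eq_bigr do rewrite /= size_block_values.
  by move: trivP; rewrite /trivIset coverP card_segment => /eqP ->.
- move=> p /mapP [B]; rewrite mem_enum => BP ->.
  case: (goodP B BP) => card3 [s sumB]; split; last by exists s; rewrite -sum_block_values.
  rewrite size_block_values card3 andbT card_gt0; apply: contraNneq P0 => <-.
  exact: BP.
Qed.

Definition tail_splittable n := exists2 m, m < n & exists T, good_split m.+1 (n - m) T.

Lemma three_good_partition_of_tail n :
  (forall m, 0 < m -> m < n -> has_three_good_partition m) ->
  tail_splittable n -> has_three_good_partition n.
Proof.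
move=> small [m lt_mn [T splitT]].
have [L splitL] : exists L, good_split 1 m L.
  case: m lt_mn splitT => [|m] lt_mn splitT; first by exists [::]; split.
  exact: split_of_three_good_partition (small _ _ lt_mn).
apply: (@three_good_partition_of_split _ (L ++ T)).
rewrite -add1n in splitT; have := good_split_cat splitL splitT.
by rewrite subnKC // ltnW.
Qed.

Lemma odd_exp3 t : odd (3 ^ t).
Proof. by rewrite oddX orbT. Qed.

Definition pairs P a c := [seq [:: k; P - k] | k <- iota a c].

Definition complement_pairs P m := pairs P m.+1 (P./2 - m).

Lemma mem_complement_pairs P m x :
  odd P -> m < x < P - m -> x \in flatten (complement_pairs P m).
Proof.
move=> oddP hx; have halfP := odd_double_half P; rewrite oddP in halfP.
apply/flatten_mapP; case: (leqP x P./2) => hxP.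
  by exists x; rewrite ?mem_iota ?inE ?eqxx //; lia.
by exists (P - x); rewrite ?mem_iota ?inE; lia.
Qed.

Lemma size_complement_pairs P m :
  size (flatten (complement_pairs P m)) = (P./2 - m).*2.
Proof. by rewrite (@size_flatten_map_const _ _ _ _ 2) // size_iota mul2n. Qed.

Lemma good_complement_pairs t m :
  {in complement_pairs (3 ^ t) m, forall p, good_block p}.
Proof.
move=> p /mapP [k]; rewrite mem_iota => hk ->; split => //.
by exists t => /=; lia.
Qed.

Lemma tail_splittable_upper_half t n : n < 3 ^ t < n.*2 -> tail_splittable n.
Proof.
move=> /andP [lo hi]; have halfP := odd_double_half (3 ^ t); rewrite odd_exp3 in halfP.
exists (3 ^ t - n.+1); first lia.
exists (complement_pairs (3 ^ t) (3 ^ t - n.+1)); apply: good_split_of_cover.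
- by move=> x hx; apply: mem_complement_pairs; rewrite ?odd_exp3 //; lia.
- by rewrite size_complement_pairs; lia.
- exact: good_complement_pairs.
Qed.

Definition triple_up P a b := [:: P + a; P + b; P - (a + b)].
Definition triple_down P a b := [:: P - a; P - b; P + (a + b)].

Lemma good_triple_up t a b : a + b <= 3 ^ t -> good_block (triple_up (3 ^ t) a b).
Proof. by move=> hab; split => //; exists t.+1; rewrite expnS /=; lia. Qed.

Lemma good_triple_down t a b :
  a <= 3 ^ t -> b <= 3 ^ t -> good_block (triple_down (3 ^ t) a b).
Proof. by move=> ha hb; split => //; exists t.+1; rewrite expnS /=; lia. Qed.

Lemma tail_splittable_around t d L :
  d.*2 < 3 ^ t -> (forall x, 3 ^ t - d <= x <= 3 ^ t + d -> x \in flatten L) ->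
  size (flatten L) <= d.*2.+1 -> {in L, forall p, good_block p} ->
  tail_splittable (3 ^ t + d).
Proof.
move=> hd coverL sizeL goodL; have halfP := odd_double_half (3 ^ t).
rewrite odd_exp3 in halfP.
exists d; first lia.
exists (L ++ complement_pairs (3 ^ t) d); apply: good_split_of_cover.
- move=> x hx; rewrite flatten_cat mem_cat.
  case: (ltnP x (3 ^ t - d)) => hxd; last by rewrite coverL //; lia.
  by rewrite mem_complement_pairs ?orbT ?odd_exp3 //; lia.
- by rewrite flatten_cat size_cat size_complement_pairs; lia.
- by move=> p; rewrite mem_cat => /orP[/goodL|/good_complement_pairs].
Qed.

Definition around_3q P q :=
  [:: P] :: [seq triple_up P i (3 * q + 1 - 2 * i) | i <- iota 1 q]
            ++ [seq triple_down P i (q + i) | i <- iota 1 q].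

Definition around_3q1 P r :=
  [seq triple_down P w (r + 1 + w) | w <- iota 0 r.+1]
  ++ [seq triple_up P u (3 * r + 2 - 2 * u) | u <- iota 1 r].

Lemma mem_flatten_iota (f : nat -> seq nat) a c i x :
  a <= i < a + c -> x \in f i -> x \in flatten [seq f j | j <- iota a c].
Proof. by move=> hi xf; apply/flatten_mapP; exists i; rewrite ?mem_iota. Qed.

Lemma tail_splittable_3q t q : (3 * q).*2 < 3 ^ t -> tail_splittable (3 ^ t + 3 * q).
Proof.
move=> hq; apply: (tail_splittable_around (L := around_3q (3 ^ t) q)) => //.
- move=> x hx; rewrite /= inE flatten_cat mem_cat.
  case: (ltngtP x (3 ^ t)) => [lt_x|gt_x|_] //.
  + apply/or3P; have [le_q|gt_q] := leqP (3 ^ t - x) q.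
      by apply: Or33; apply: (@mem_flatten_iota _ 1 q (3 ^ t - x)); rewrite ?inE; lia.
    have [le_2q|gt_2q] := leqP (3 ^ t - x) (2 * q).
      by apply: Or33; apply: (@mem_flatten_iota _ 1 q (3 ^ t - x - q)); rewrite ?inE; lia.
    by apply: Or32; apply: (@mem_flatten_iota _ 1 q (3 * q + 1 - (3 ^ t - x))); rewrite ?inE; lia.
  + apply/or3P; have [le_q|gt_q] := leqP (x - 3 ^ t) q.
      by apply: Or32; apply: (@mem_flatten_iota _ 1 q (x - 3 ^ t)); rewrite ?inE; lia.
    have [odd_off|even_off] := boolP (odd (x - 3 ^ t - q)).
      by apply: Or32; apply: (@mem_flatten_iota _ 1 q (q - (x - 3 ^ t - q)./2)); rewrite ?inE; lia.
    by apply: Or33; apply: (@mem_flatten_iota _ 1 q ((x - 3 ^ t - q)./2)); rewrite ?inE; lia.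
- rewrite /= flatten_cat size_cat !(@size_flatten_map_const _ _ _ _ 3) // size_iota.
  lia.
- move=> p; rewrite inE mem_cat => /or3P [/eqP->|/mapP [i]|/mapP [i]].
  + by split => //; exists t; rewrite /= addn0.
  + by rewrite mem_iota => hi ->; apply: good_triple_up; lia.
  + by rewrite mem_iota => hi ->; apply: good_triple_down; lia.
Qed.

Lemma tail_splittable_3q1 t r :
  (3 * r + 1).*2 < 3 ^ t -> tail_splittable (3 ^ t + (3 * r + 1)).
Proof.
move=> hr; apply: (tail_splittable_around (L := around_3q1 (3 ^ t) r)) => //.
- move=> x hx; rewrite flatten_cat mem_cat; apply/orP.
  have [le_x|gt_x] := leqP x (3 ^ t).
  + have [le_r|gt_r] := leqP (3 ^ t - x) r.
      by left; apply: (@mem_flatten_iota _ 0 r.+1 (3 ^ t - x)); rewrite ?inE; lia.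
    have [le_2r|gt_2r] := leqP (3 ^ t - x) (2 * r + 1).
      by left; apply: (@mem_flatten_iota _ 0 r.+1 (3 ^ t - x - r - 1)); rewrite ?inE; lia.
    by right; apply: (@mem_flatten_iota _ 1 r (3 * r + 2 - (3 ^ t - x))); rewrite ?inE; lia.
  + have [le_r|gt_r] := leqP (x - 3 ^ t) r.
      by right; apply: (@mem_flatten_iota _ 1 r (x - 3 ^ t)); rewrite ?inE; lia.
    have [odd_off|even_off] := boolP (odd (x - 3 ^ t - r - 1)).
      by right; apply: (@mem_flatten_iota _ 1 r (r - (x - 3 ^ t - r - 1)./2)); rewrite ?inE; lia.
    by left; apply: (@mem_flatten_iota _ 0 r.+1 ((x - 3 ^ t - r - 1)./2)); rewrite ?inE; lia.
- rewrite flatten_cat size_cat !(@size_flatten_map_const _ _ _ _ 3) // !size_iota.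
  lia.
- move=> p; rewrite mem_cat => /orP [/mapP [w]|/mapP [u]]; rewrite mem_iota => hp ->.
  + by apply: good_triple_down; lia.
  + by apply: good_triple_up; lia.
Qed.

Lemma tail_splittable_off_window n :
  0 < n -> ~ tail_splittable n ->
  n %% 3 = 2 /\ exists t, 3 ^ t + 1 < n /\ n.*2 < 3 ^ t.+1 + 1.
Proof.
move=> n0 not_split.
have /andP [lo hi] := trunc_log_bounds (isT : 1 < 3) n0.
set t := trunc_log 3 n in lo hi.
have le_n2 : n.*2 <= 3 ^ t.+1.
  rewrite leqNgt; apply/negP => lt_n2; apply: not_split.
  by apply: (@tail_splittable_upper_half t.+1); rewrite hi.
have halfP := odd_double_half (3 ^ t); rewrite odd_exp3 expnS in halfP le_n2.
have n_eq : n = 3 ^ t + (n - 3 ^ t) by rewrite subnKC.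
have : (n - 3 ^ t) %% 3 = 2 \/ n - 3 ^ t = 3 * ((n - 3 ^ t) %/ 3)
       \/ n - 3 ^ t = 3 * ((n - 3 ^ t) %/ 3) + 1 by lia.
case=> [d2|[d0|d1]]; last 2 first.
- by case: not_split; rewrite n_eq d0; apply: tail_splittable_3q; lia.
- by case: not_split; rewrite n_eq d1; apply: tail_splittable_3q1; lia.
have [t' t_eq] : exists t', t = t'.+1.
  by case: t halfP le_n2 lo hi n_eq d2 => [|t'] /=; [lia | exists t'].
split; first by move: n_eq d2; rewrite t_eq expnS; lia.
by exists t; rewrite expnS; lia.
Qed.

Definition good_blockb (p : seq nat) :=
  (0 < size p <= 3) && (sumn p \in [seq 3 ^ s | s <- iota 0 8]).

Definition tail_certificate n m T :=
  [&& m < n, sort leq (flatten T) == iota m.+1 (n - m) & all good_blockb T].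

Lemma tail_certificateP n m T : tail_certificate n m T -> tail_splittable n.
Proof.
case/and3P => lt_mn /eqP sortT /allP goodT; exists m => //; exists T; split.
  by rewrite -sortT perm_sym perm_sort.
by move=> p /goodT /andP [size_p /mapP [s _ sum_p]]; split => //; exists s.
Qed.

(* A certificate (n, t, m, X, R) splits {m+1, ..., n} into the blocks X and the pairs
   {k, 3^t - k} for a <= k < a + c, (a, c) in R.  Entries are binary [N] numbers, since
   unary [nat] literals would make the table huge. *)
Definition certificate := (N * N * N * seq (seq N) * seq (N * N))%type.

Definition certificate_for (n : nat) (c : certificate) :=
  let: (n', t, m, X, R) := c in
  (* [if] rather than [&&]: the VM evaluates both arguments of [andb]. *)
  if n' == n :> nat then
    tail_certificate n m
      (map (map nat_of_bin) X ++ flatten [seq pairs (3 ^ t) r.1 r.2 | r : N * N <- R])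
  else false.

Definition certificates : seq certificate :=
[::
  (11, 2, 0,
   [:: [:: 6; 11; 10]; [:: 9]; [:: 3]],
   [:: (1, 2); (4, 1)]);
  (29, 3, 0,
   [:: [:: 24; 29; 28]; [:: 27]; [:: 3]],
   [:: (1, 2); (4, 10)]);
  (32, 3, 3,
   [:: [:: 18; 32; 31]; [:: 30; 25; 26]; [:: 24; 29; 28]; [:: 27]; [:: 9]],
   [:: (4, 5); (10, 4)]);
  (35, 3, 0,
   [:: [:: 15; 34; 32]; [:: 17; 35; 29]; [:: 18; 33; 30]; [:: 22; 31; 28]; [:: 27]; [:: 9];
       [:: 5; 10; 12]],
   [:: (1, 4); (6, 3); (11, 1); (13, 1)]);
  (38, 3, 2,
   [:: [:: 14; 38; 29]; [:: 15; 36; 30]; [:: 37; 19; 25]; [:: 18; 32; 31]; [:: 35; 22; 24];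
       [:: 34; 21; 26]; [:: 20; 33; 28]; [:: 27]; [:: 7; 8; 12]; [:: 5; 9; 13]; [:: 3; 6]],
   [:: (4, 1); (10, 2)]);
  (83, 4, 0,
   [:: [:: 78; 83; 82]; [:: 81]; [:: 3]],
   [:: (1, 2); (4, 37)]);
  (86, 4, 3,
   [:: [:: 72; 86; 85]; [:: 84; 79; 80]; [:: 78; 83; 82]; [:: 81]; [:: 9]],
   [:: (4, 5); (10, 31)]);
  (89, 4, 0,
   [:: [:: 67; 89; 87]; [:: 88; 74; 81]; [:: 75; 86; 82]; [:: 76; 84; 83]; [:: 85; 78; 80];
       [:: 6; 7; 14]; [:: 1; 3; 5]],
   [:: (2, 1); (4, 1); (8, 6); (15, 26)]);
  (92, 4, 2,
   [:: [:: 63; 92; 88]; [:: 69; 91; 83]; [:: 90; 72; 81]; [:: 89; 75; 79]; [:: 73; 86; 84];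
       [:: 74; 87; 82]; [:: 85; 78; 80]; [:: 3; 6; 18]; [:: 7; 8; 12]; [:: 9]],
   [:: (4, 2); (10, 2); (13, 5); (19, 22)]);
  (95, 4, 12,
   [:: [:: 54; 95; 94]; [:: 93; 70; 80]; [:: 69; 92; 82]; [:: 91; 74; 78]; [:: 71; 88; 84];
       [:: 90; 76; 77]; [:: 72; 86; 85]; [:: 89; 75; 79]; [:: 73; 87; 83]; [:: 81]; [:: 27]],
   [:: (13, 14); (28, 13)]);
  (98, 4, 9,
   [:: [:: 51; 97; 95]; [:: 53; 98; 92]; [:: 54; 96; 93]; [:: 58; 94; 91]; [:: 90; 73; 80];
       [:: 72; 88; 83]; [:: 89; 76; 78]; [:: 74; 85; 84]; [:: 87; 77; 79]; [:: 75; 86; 82];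
       [:: 81]; [:: 23; 28; 30]; [:: 27]],
   [:: (10, 13); (24, 3); (29, 1); (31, 10)]);
  (101, 4, 6,
   [:: [:: 43; 101; 99]; [:: 48; 100; 95]; [:: 50; 97; 96]; [:: 53; 98; 92]; [:: 61; 94; 88];
       [:: 93; 69; 81]; [:: 70; 91; 82]; [:: 90; 74; 79]; [:: 72; 87; 84]; [:: 89; 76; 78];
       [:: 75; 85; 83]; [:: 86; 77; 80]; [:: 12; 31; 38]; [:: 20; 28; 33]; [:: 7; 9; 11]],
   [:: (8, 1); (10, 1); (13, 7); (21, 7); (29, 2); (32, 1); (34, 4); (39, 2)]);
  (104, 4, 3,
   [:: [:: 45; 104; 94]; [:: 46; 102; 95]; [:: 47; 103; 93]; [:: 48; 99; 96]; [:: 51; 101; 91];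
       [:: 56; 100; 87]; [:: 58; 97; 88]; [:: 98; 64; 81]; [:: 69; 92; 82]; [:: 71; 89; 83];
       [:: 90; 73; 80]; [:: 74; 85; 84]; [:: 86; 78; 79]; [:: 17; 30; 34]; [:: 10; 35; 36];
       [:: 23; 25; 33]; [:: 7; 8; 12]],
   [:: (4, 3); (9, 1); (11, 1); (13, 4); (18, 5); (24, 1); (26, 4); (31, 2); (37, 4)]);
  (107, 4, 0,
   [:: [:: 42; 107; 94]; [:: 45; 106; 92]; [:: 46; 104; 93]; [:: 52; 105; 86]; [:: 54; 102; 87];
       [:: 103; 59; 81]; [:: 101; 62; 80]; [:: 61; 100; 82]; [:: 99; 65; 79]; [:: 63; 96; 84];
       [:: 98; 69; 76]; [:: 64; 91; 88]; [:: 97; 72; 74]; [:: 95; 73; 75]; [:: 68; 90; 85];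
       [:: 71; 89; 83]; [:: 19; 27; 35]; [:: 20; 22; 39]; [:: 1; 9; 17]; [:: 2; 7; 18];
       [:: 16; 29; 36]; [:: 6; 8; 13]; [:: 5; 10; 12]],
   [:: (3, 2); (11, 1); (14, 2); (21, 1); (23, 4); (28, 1); (30, 5); (37, 2); (40, 1)]);
  (110, 4, 6,
   [:: [:: 41; 110; 92]; [:: 43; 109; 91]; [:: 45; 108; 90]; [:: 47; 107; 89]; [:: 49; 106; 88];
       [:: 50; 100; 93]; [:: 53; 105; 85]; [:: 54; 95; 94]; [:: 56; 104; 83]; [:: 57; 102; 84];
       [:: 58; 99; 86]; [:: 103; 61; 79]; [:: 101; 65; 77]; [:: 63; 98; 82]; [:: 97; 68; 78];
       [:: 96; 72; 75]; [:: 87; 76; 80]; [:: 81]; [:: 23; 24; 34]; [:: 16; 27; 38];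
       [:: 20; 25; 36]; [:: 18; 31; 32]; [:: 13; 28; 40]; [:: 9]],
   [:: (7, 2); (10, 3); (14, 2); (17, 1); (19, 1); (21, 2); (26, 1); (29, 2); (33, 1); (35, 1);
       (37, 1); (39, 1)]);
  (113, 4, 5,
   [:: [:: 41; 113; 89]; [:: 43; 112; 88]; [:: 44; 109; 90]; [:: 45; 111; 87]; [:: 46; 106; 91];
       [:: 47; 110; 86]; [:: 48; 103; 92]; [:: 49; 101; 93]; [:: 50; 108; 85]; [:: 51; 98; 94];
       [:: 52; 96; 95]; [:: 54; 107; 82]; [:: 105; 60; 78]; [:: 104; 68; 71]; [:: 102; 61; 80];
       [:: 100; 70; 73]; [:: 99; 65; 79]; [:: 97; 69; 77]; [:: 76; 84; 83]; [:: 81];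
       [:: 8; 35; 38]; [:: 20; 30; 31]; [:: 11; 16]; [:: 10; 34; 37]; [:: 21; 27; 33];
       [:: 13; 32; 36]; [:: 12; 29; 40]],
   [:: (6, 2); (9, 1); (14, 2); (17, 3); (22, 5); (28, 1); (39, 1)]);
  (116, 4, 8,
   [:: [:: 42; 116; 85]; [:: 43; 114; 86]; [:: 44; 115; 84]; [:: 45; 111; 87]; [:: 46; 109; 88];
       [:: 47; 113; 83]; [:: 48; 106; 89]; [:: 49; 112; 82]; [:: 50; 103; 90]; [:: 51; 101; 91];
       [:: 110; 56; 77]; [:: 53; 97; 93]; [:: 108; 60; 75]; [:: 54; 95; 94]; [:: 107; 62; 74];
       [:: 55; 96; 92]; [:: 105; 65; 73]; [:: 104; 68; 71]; [:: 102; 63; 78]; [:: 100; 67; 76];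
       [:: 99; 64; 80]; [:: 98; 66; 79]; [:: 81]; [:: 15; 31; 35]; [:: 18; 27; 36];
       [:: 21; 28; 32]; [:: 17; 30; 34]; [:: 13; 14]; [:: 19; 25; 37]; [:: 16; 26; 39];
       [:: 10; 33; 38]],
   [:: (9, 1); (11, 2); (20, 1); (22, 3); (29, 1); (40, 1)]);
  (119, 4, 0,
   [:: [:: 66; 79; 98]; [:: 58; 77; 108]; [:: 61; 75; 107]; [:: 56; 73; 114]; [:: 72; 76; 95];
       [:: 64; 67; 112]; [:: 57; 83; 103]; [:: 65; 86; 92]; [:: 5; 7; 69]; [:: 70; 85; 88];
       [:: 59; 74; 110]; [:: 63; 80; 100]; [:: 71; 78; 94]; [:: 68; 82; 93]; [:: 49; 81; 113];
       [:: 62; 84; 97]; [:: 21; 60]; [:: 42; 90; 111]; [:: 30; 96; 117]; [:: 35; 89; 119];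
       [:: 26; 99; 118]; [:: 36; 91; 116]; [:: 40; 101; 102]; [:: 28; 106; 109];
       [:: 24; 104; 115]; [:: 51; 87; 105]; [:: 9; 17; 55]; [:: 12; 15; 54]; [:: 10; 18; 53];
       [:: 2; 27; 52]; [:: 6; 25; 50]; [:: 38; 43]; [:: 11; 29; 41]; [:: 37; 44];
       [:: 19; 23; 39]; [:: 1; 8]; [:: 33; 48]; [:: 16; 31; 34]; [:: 14; 20; 47]; [:: 4; 32; 45];
       [:: 13; 22; 46]; [:: 3]],
   [::]);
  (245, 5, 0,
   [:: [:: 240; 245; 244]; [:: 243]; [:: 3]],
   [:: (1, 2); (4, 118)]);
  (248, 5, 3,
   [:: [:: 234; 248; 247]; [:: 246; 241; 242]; [:: 240; 245; 244]; [:: 243]; [:: 9]],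
   [:: (4, 5); (10, 112)]);
  (251, 5, 0,
   [:: [:: 229; 251; 249]; [:: 250; 236; 243]; [:: 237; 248; 244]; [:: 238; 246; 245];
       [:: 247; 240; 242]; [:: 6; 7; 14]; [:: 1; 3; 5]],
   [:: (2, 1); (4, 1); (8, 6); (15, 107)]);
  (254, 5, 2,
   [:: [:: 225; 254; 250]; [:: 231; 253; 245]; [:: 252; 234; 243]; [:: 251; 237; 241];
       [:: 235; 248; 246]; [:: 236; 249; 244]; [:: 247; 240; 242]; [:: 3; 6; 18]; [:: 7; 8; 12];
       [:: 9]],
   [:: (4, 2); (10, 2); (13, 5); (19, 103)]);
  (257, 5, 12,
   [:: [:: 216; 257; 256]; [:: 255; 232; 242]; [:: 231; 254; 244]; [:: 253; 236; 240];
       [:: 233; 250; 246]; [:: 252; 238; 239]; [:: 234; 248; 247]; [:: 251; 237; 241];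
       [:: 235; 249; 245]; [:: 243]; [:: 27]],
   [:: (13, 14); (28, 94)]);
  (260, 5, 9,
   [:: [:: 213; 259; 257]; [:: 215; 260; 254]; [:: 216; 258; 255]; [:: 220; 256; 253];
       [:: 252; 235; 242]; [:: 234; 250; 245]; [:: 251; 238; 240]; [:: 236; 247; 246];
       [:: 249; 239; 241]; [:: 237; 248; 244]; [:: 243]; [:: 23; 28; 30]; [:: 27]],
   [:: (10, 13); (24, 3); (29, 1); (31, 91)]);
  (263, 5, 6,
   [:: [:: 205; 263; 261]; [:: 210; 262; 257]; [:: 212; 259; 258]; [:: 215; 260; 254];
       [:: 223; 256; 250]; [:: 255; 231; 243]; [:: 232; 253; 244]; [:: 252; 236; 241];
       [:: 234; 249; 246]; [:: 251; 238; 240]; [:: 237; 247; 245]; [:: 248; 239; 242];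
       [:: 12; 31; 38]; [:: 20; 28; 33]; [:: 7; 9; 11]],
   [:: (8, 1); (10, 1); (13, 7); (21, 7); (29, 2); (32, 1); (34, 4); (39, 83)]);
  (266, 5, 3,
   [:: [:: 200; 266; 263]; [:: 207; 265; 257]; [:: 212; 264; 253]; [:: 215; 262; 252];
       [:: 216; 259; 254]; [:: 217; 261; 251]; [:: 219; 260; 250]; [:: 225; 258; 246];
       [:: 226; 256; 247]; [:: 255; 232; 242]; [:: 249; 239; 241]; [:: 248; 238; 243];
       [:: 240; 245; 244]; [:: 4; 5; 18]; [:: 11; 27; 43]; [:: 17; 28; 36]; [:: 24; 26; 31]],
   [:: (6, 5); (12, 5); (19, 5); (25, 1); (29, 2); (32, 4); (37, 6); (44, 78)]);
  (269, 5, 0,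
   [:: [:: 193; 269; 267]; [:: 199; 268; 262]; [:: 208; 266; 255]; [:: 209; 264; 256];
       [:: 211; 265; 253]; [:: 214; 261; 254]; [:: 218; 263; 248]; [:: 219; 260; 250];
       [:: 220; 258; 251]; [:: 259; 229; 241]; [:: 227; 257; 245]; [:: 231; 252; 246];
       [:: 233; 249; 247]; [:: 244; 242; 243]; [:: 2; 29; 50]; [:: 14; 23; 44]; [:: 1; 10; 16];
       [:: 24; 25; 32]; [:: 12; 34; 35]],
   [:: (3, 7); (11, 1); (13, 1); (15, 1); (17, 6); (26, 3); (30, 2); (33, 1); (36, 8); (45, 5);
       (51, 71)]);
  (272, 5, 6,
   [:: [:: 194; 272; 263]; [:: 199; 271; 259]; [:: 201; 270; 258]; [:: 205; 269; 255];
       [:: 212; 268; 249]; [:: 215; 267; 247]; [:: 216; 265; 248]; [:: 217; 266; 246];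
       [:: 218; 261; 250]; [:: 220; 264; 245]; [:: 221; 256; 252]; [:: 262; 226; 241];
       [:: 260; 232; 237]; [:: 228; 257; 244]; [:: 254; 236; 239]; [:: 253; 234; 242];
       [:: 251; 238; 240]; [:: 243]; [:: 11; 28; 42]; [:: 15; 22; 44]; [:: 23; 27; 31];
       [:: 17; 26; 38]; [:: 7; 25; 49]; [:: 9]],
   [:: (8, 1); (10, 1); (12, 3); (16, 1); (18, 4); (24, 1); (29, 2); (32, 6); (39, 3); (43, 1);
       (45, 4); (50, 72)]);
  (275, 5, 5,
   [:: [:: 191; 275; 263]; [:: 197; 274; 258]; [:: 203; 273; 253]; [:: 205; 272; 252];
       [:: 207; 271; 251]; [:: 208; 267; 254]; [:: 270; 216; 243]; [:: 269; 218; 242];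
       [:: 217; 268; 244]; [:: 266; 222; 241]; [:: 220; 264; 245]; [:: 265; 224; 240];
       [:: 223; 257; 249]; [:: 262; 228; 239]; [:: 261; 233; 235]; [:: 260; 231; 238];
       [:: 226; 255; 248]; [:: 259; 234; 236]; [:: 227; 256; 246]; [:: 232; 250; 247];
       [:: 8; 21; 52]; [:: 7; 9; 11]; [:: 35; 46]; [:: 27]; [:: 16; 25; 40]; [:: 20; 23; 38];
       [:: 12; 15]; [:: 19; 26; 36]; [:: 10; 17]],
   [:: (6, 1); (13, 2); (18, 1); (22, 1); (24, 1); (28, 7); (37, 1); (39, 1); (41, 5); (47, 5);
       (53, 69)]);
  (278, 5, 8,
   [:: [:: 177; 278; 274]; [:: 191; 277; 261]; [:: 198; 276; 255]; [:: 201; 275; 253];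
       [:: 208; 273; 248]; [:: 210; 272; 247]; [:: 211; 269; 249]; [:: 212; 271; 246];
       [:: 213; 266; 250]; [:: 270; 216; 243]; [:: 217; 268; 244]; [:: 267; 221; 241];
       [:: 219; 258; 252]; [:: 265; 225; 239]; [:: 264; 227; 238]; [:: 263; 226; 240];
       [:: 224; 254; 251]; [:: 262; 231; 236]; [:: 260; 234; 235]; [:: 259; 233; 237];
       [:: 228; 256; 245]; [:: 257; 230; 242]; [:: 12; 27; 42]; [:: 13; 16; 52]; [:: 9; 18];
       [:: 17; 31; 33]; [:: 10; 26; 45]; [:: 15; 66]; [:: 22; 24; 35]; [:: 19; 30; 32]],
   [:: (11, 1); (14, 1); (20, 2); (23, 1); (25, 1); (28, 2); (34, 1); (36, 6); (43, 2); (46, 6);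
       (53, 13); (67, 55)]);
  (281, 5, 11,
   [:: [:: 183; 281; 265]; [:: 191; 280; 258]; [:: 196; 279; 254]; [:: 198; 278; 253];
       [:: 199; 275; 255]; [:: 200; 277; 252]; [:: 203; 276; 250]; [:: 206; 274; 249];
       [:: 207; 271; 251]; [:: 209; 273; 247]; [:: 272; 216; 241]; [:: 270; 217; 242];
       [:: 269; 220; 240]; [:: 268; 218; 243]; [:: 267; 223; 239]; [:: 266; 225; 238];
       [:: 264; 230; 235]; [:: 222; 262; 245]; [:: 263; 232; 234]; [:: 224; 257; 248];
       [:: 261; 231; 237]; [:: 260; 233; 236]; [:: 226; 259; 244]; [:: 227; 256; 246];
       [:: 13; 16; 52]; [:: 20; 25; 36]; [:: 17; 19; 45]; [:: 12; 26; 43]; [:: 37; 44];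
       [:: 21; 60]; [:: 18; 23; 40]; [:: 34; 47]; [:: 27]],
   [:: (14, 2); (22, 1); (24, 1); (28, 6); (35, 1); (38, 2); (41, 2); (46, 1); (48, 4); (53, 7);
       (61, 61)]);
  (284, 5, 14,
   [:: [:: 186; 284; 259]; [:: 187; 282; 260]; [:: 190; 283; 256]; [:: 196; 281; 252];
       [:: 198; 280; 251]; [:: 199; 277; 253]; [:: 200; 279; 250]; [:: 201; 274; 254];
       [:: 205; 278; 246]; [:: 208; 276; 245]; [:: 209; 273; 247]; [:: 275; 213; 241];
       [:: 272; 215; 242]; [:: 271; 218; 240]; [:: 270; 221; 238]; [:: 216; 258; 255];
       [:: 269; 225; 235]; [:: 268; 227; 234]; [:: 267; 229; 233]; [:: 219; 261; 249];
       [:: 266; 231; 232]; [:: 265; 228; 236]; [:: 264; 226; 239]; [:: 222; 263; 244];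
       [:: 262; 230; 237]; [:: 224; 257; 248]; [:: 243]; [:: 17; 22; 42]; [:: 15; 21; 45];
       [:: 28; 53]; [:: 25; 56]; [:: 34; 47]; [:: 38; 43]; [:: 18; 19; 44]; [:: 16; 30; 35];
       [:: 24; 57]; [:: 27]],
   [:: (20, 1); (23, 1); (26, 1); (29, 1); (31, 3); (36, 2); (39, 3); (46, 1); (48, 5); (54, 2);
       (58, 64)]);
  (287, 5, 17,
   [:: [:: 158; 287; 284]; [:: 160; 286; 283]; [:: 168; 285; 276]; [:: 184; 282; 263];
       [:: 185; 280; 264]; [:: 186; 281; 262]; [:: 196; 279; 254]; [:: 197; 277; 255];
       [:: 201; 278; 250]; [:: 208; 275; 246]; [:: 209; 273; 247]; [:: 211; 274; 244];
       [:: 272; 215; 242]; [:: 271; 219; 239]; [:: 270; 221; 238]; [:: 216; 268; 245];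
       [:: 269; 223; 237]; [:: 267; 227; 235]; [:: 266; 229; 234]; [:: 220; 256; 253];
       [:: 265; 231; 233]; [:: 222; 258; 249]; [:: 224; 257; 248]; [:: 261; 232; 236];
       [:: 260; 228; 241]; [:: 226; 252; 251]; [:: 259; 230; 240]; [:: 243]; [:: 23; 58];
       [:: 19; 20; 42]; [:: 24; 57]; [:: 35; 46]; [:: 75; 83; 85]; [:: 21; 28; 32]; [:: 34; 47];
       [:: 22; 59]; [:: 27]],
   [:: (18, 1); (25, 2); (29, 3); (33, 1); (36, 6); (43, 3); (48, 9); (60, 15); (76, 7); (84, 1);
       (86, 36)]);
  (290, 5, 20,
   [:: [:: 154; 290; 285]; [:: 156; 289; 284]; [:: 160; 288; 281]; [:: 165; 287; 277];
       [:: 167; 286; 276]; [:: 170; 280; 279]; [:: 183; 283; 263]; [:: 185; 282; 262];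
       [:: 186; 278; 265]; [:: 188; 275; 266]; [:: 199; 274; 256]; [:: 206; 273; 250];
       [:: 272; 216; 241]; [:: 271; 219; 239]; [:: 270; 217; 242]; [:: 269; 220; 240];
       [:: 268; 223; 238]; [:: 267; 226; 236]; [:: 264; 231; 234]; [:: 222; 259; 248];
       [:: 224; 258; 247]; [:: 261; 233; 235]; [:: 225; 253; 251]; [:: 260; 232; 237];
       [:: 227; 257; 245]; [:: 228; 252; 249]; [:: 229; 254; 246]; [:: 230; 255; 244]; [:: 243];
       [:: 73; 83; 87]; [:: 26; 55]; [:: 23; 58]; [:: 37; 44]; [:: 76; 78; 89]; [:: 21; 60];
       [:: 24; 57]; [:: 27]],
   [:: (22, 1); (25, 1); (28, 9); (38, 6); (45, 10); (56, 1); (59, 1); (61, 12); (74, 2);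
       (77, 1); (79, 4); (84, 3); (88, 1); (90, 32)]);
  (293, 5, 23,
   [:: [:: 145; 293; 291]; [:: 150; 290; 289]; [:: 152; 292; 285]; [:: 156; 287; 286];
       [:: 157; 288; 284]; [:: 164; 283; 282]; [:: 170; 281; 278]; [:: 173; 280; 276];
       [:: 191; 279; 259]; [:: 196; 277; 256]; [:: 198; 274; 257]; [:: 207; 275; 247];
       [:: 209; 272; 248]; [:: 212; 273; 244]; [:: 271; 216; 242]; [:: 270; 219; 240];
       [:: 269; 221; 239]; [:: 217; 267; 245]; [:: 268; 223; 238]; [:: 266; 228; 235];
       [:: 220; 260; 249]; [:: 265; 230; 234]; [:: 264; 232; 233]; [:: 222; 255; 252];
       [:: 263; 229; 237]; [:: 262; 231; 236]; [:: 224; 254; 251]; [:: 261; 227; 241];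
       [:: 225; 258; 246]; [:: 226; 253; 250]; [:: 243]; [:: 52; 93; 98]; [:: 73; 79; 91];
       [:: 70; 86; 87]; [:: 24; 26; 31]; [:: 34; 47]; [:: 36; 45]; [:: 27]],
   [:: (25, 1); (28, 3); (32, 2); (35, 1); (37, 8); (46, 1); (48, 4); (53, 17); (71, 2); (74, 5);
       (80, 6); (88, 3); (92, 1); (94, 4); (99, 23)]);
  (296, 5, 0,
   [:: [:: 145; 296; 288]; [:: 147; 295; 287]; [:: 148; 292; 289]; [:: 149; 294; 286];
       [:: 154; 293; 282]; [:: 160; 291; 278]; [:: 176; 290; 263]; [:: 178; 285; 266];
       [:: 182; 283; 264]; [:: 183; 284; 262]; [:: 186; 276; 267]; [:: 191; 281; 257];
       [:: 194; 280; 255]; [:: 196; 279; 254]; [:: 202; 277; 250]; [:: 203; 275; 251];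
       [:: 274; 213; 242]; [:: 273; 215; 241]; [:: 272; 217; 240]; [:: 214; 271; 244];
       [:: 270; 221; 238]; [:: 216; 265; 248]; [:: 269; 228; 232]; [:: 268; 224; 237];
       [:: 218; 259; 252]; [:: 222; 258; 249]; [:: 223; 261; 245]; [:: 260; 234; 235];
       [:: 226; 256; 247]; [:: 230; 253; 246]; [:: 243]; [:: 49; 96; 98]; [:: 3; 11; 67];
       [:: 13; 27; 41]; [:: 65; 83; 95]; [:: 2; 22; 57]; [:: 29; 52]; [:: 20; 21; 40];
       [:: 6; 28; 47]; [:: 60; 89; 94]; [:: 25; 26; 30]; [:: 5; 15; 61]; [:: 1; 9; 17];
       [:: 8; 19]],
   [:: (4, 1); (7, 1); (10, 1); (12, 1); (14, 1); (16, 1); (18, 1); (23, 2); (31, 9); (42, 5);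
       (48, 1); (50, 2); (53, 4); (58, 2); (62, 3); (66, 1); (68, 15); (84, 5); (90, 4); (97, 1);
       (99, 23)]);
  (299, 5, 24,
   [:: [:: 136; 299; 294]; [:: 146; 298; 285]; [:: 147; 296; 286]; [:: 148; 297; 284];
       [:: 149; 293; 287]; [:: 154; 295; 280]; [:: 156; 292; 281]; [:: 162; 291; 276];
       [:: 167; 290; 272]; [:: 168; 288; 273]; [:: 170; 289; 270]; [:: 173; 282; 274];
       [:: 180; 283; 266]; [:: 184; 278; 267]; [:: 190; 279; 260]; [:: 277; 215; 237];
       [:: 275; 216; 238]; [:: 271; 217; 241]; [:: 269; 220; 240]; [:: 268; 219; 242];
       [:: 265; 221; 243]; [:: 264; 226; 239]; [:: 222; 259; 248]; [:: 263; 231; 235];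
       [:: 223; 257; 249]; [:: 262; 233; 234]; [:: 224; 258; 247]; [:: 261; 232; 236];
       [:: 225; 253; 251]; [:: 227; 252; 250]; [:: 228; 256; 245]; [:: 229; 254; 246];
       [:: 230; 255; 244]; [:: 75; 81; 87]; [:: 63; 73; 107]; [:: 59; 89; 95]; [:: 70; 76; 97];
       [:: 53; 94; 96]; [:: 26; 27; 28]],
   [:: (25, 1); (29, 24); (54, 5); (60, 3); (64, 6); (71, 2); (74, 1); (77, 4); (82, 5); (88, 1);
       (90, 4); (98, 9); (108, 14)]);
  (302, 5, 21,
   [:: [:: 126; 302; 301]; [:: 134; 300; 295]; [:: 136; 299; 294]; [:: 139; 298; 292];
       [:: 143; 297; 289]; [:: 153; 296; 280]; [:: 154; 293; 282]; [:: 156; 290; 283];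
       [:: 157; 291; 281]; [:: 169; 288; 272]; [:: 173; 287; 269]; [:: 174; 285; 270];
       [:: 185; 286; 258]; [:: 188; 284; 257]; [:: 196; 279; 254]; [:: 198; 278; 253];
       [:: 207; 277; 245]; [:: 209; 276; 244]; [:: 275; 211; 243]; [:: 274; 213; 242];
       [:: 273; 217; 239]; [:: 214; 268; 247]; [:: 271; 220; 238]; [:: 267; 222; 240];
       [:: 266; 228; 235]; [:: 265; 230; 234]; [:: 221; 260; 248]; [:: 264; 232; 233];
       [:: 263; 229; 237]; [:: 223; 256; 250]; [:: 262; 231; 236]; [:: 224; 259; 246];
       [:: 261; 227; 241]; [:: 225; 255; 249]; [:: 226; 252; 251]; [:: 36; 90; 117];
       [:: 70; 86; 87]; [:: 22; 29; 30]; [:: 26; 55]; [:: 69; 74; 100]; [:: 32; 104; 107];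
       [:: 45; 89; 109]; [:: 34; 47]; [:: 23; 58]],
   [:: (24, 2); (27, 2); (31, 1); (33, 1); (35, 1); (37, 8); (46, 1); (48, 7); (56, 2); (59, 10);
       (71, 3); (75, 11); (88, 1); (91, 9); (101, 3); (105, 2); (108, 1); (110, 7); (118, 4)]);
  (305, 5, 18,
   [:: [:: 123; 305; 301]; [:: 135; 304; 290]; [:: 136; 302; 291]; [:: 137; 303; 289];
       [:: 138; 299; 292]; [:: 142; 300; 287]; [:: 143; 298; 288]; [:: 148; 297; 284];
       [:: 149; 295; 285]; [:: 153; 296; 280]; [:: 157; 294; 278]; [:: 166; 293; 270];
       [:: 167; 286; 276]; [:: 171; 283; 275]; [:: 178; 282; 269]; [:: 180; 281; 268];
       [:: 183; 279; 267]; [:: 193; 277; 259]; [:: 198; 274; 257]; [:: 200; 273; 256];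
       [:: 205; 272; 252]; [:: 210; 271; 248]; [:: 214; 266; 249]; [:: 265; 224; 240];
       [:: 264; 226; 239]; [:: 263; 225; 241]; [:: 262; 229; 238]; [:: 261; 231; 237];
       [:: 260; 227; 242]; [:: 258; 235; 236]; [:: 228; 255; 246]; [:: 230; 254; 245];
       [:: 232; 250; 247]; [:: 253; 233; 243]; [:: 234; 251; 244]; [:: 38; 100; 105];
       [:: 72; 76; 95]; [:: 65; 77; 101]; [:: 19; 29; 33]; [:: 50; 86; 107]; [:: 60; 63; 120];
       [:: 43; 94; 106]; [:: 45; 90; 108]],
   [:: (20, 9); (30, 3); (34, 4); (39, 4); (44, 1); (46, 4); (51, 9); (61, 2); (64, 1); (66, 6);
       (73, 3); (78, 8); (87, 3); (91, 3); (96, 4); (102, 3); (109, 11); (121, 1)]);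
  (308, 5, 15,
   [:: [:: 122; 308; 299]; [:: 123; 306; 300]; [:: 128; 307; 294]; [:: 134; 305; 290];
       [:: 135; 303; 291]; [:: 145; 304; 280]; [:: 151; 302; 276]; [:: 153; 301; 275];
       [:: 154; 298; 277]; [:: 162; 297; 270]; [:: 164; 296; 269]; [:: 168; 295; 266];
       [:: 169; 293; 267]; [:: 171; 287; 271]; [:: 172; 292; 265]; [:: 179; 289; 261];
       [:: 189; 288; 252]; [:: 192; 286; 251]; [:: 195; 285; 249]; [:: 197; 284; 248];
       [:: 199; 283; 247]; [:: 200; 279; 250]; [:: 282; 210; 237]; [:: 281; 212; 236];
       [:: 278; 211; 240]; [:: 274; 213; 242]; [:: 273; 217; 239]; [:: 272; 222; 235];
       [:: 214; 262; 253]; [:: 268; 227; 234]; [:: 220; 255; 254]; [:: 221; 263; 245];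
       [:: 264; 232; 233]; [:: 225; 258; 246]; [:: 260; 231; 238]; [:: 259; 229; 241];
       [:: 228; 257; 244]; [:: 256; 230; 243]; [:: 48; 75; 120]; [:: 18; 30; 33];
       [:: 46; 89; 108]; [:: 21; 29; 31]; [:: 64; 81; 98]; [:: 44; 90; 109]; [:: 51; 71; 121];
       [:: 54; 74; 115]; [:: 72; 79; 92]; [:: 23; 26; 32]; [:: 16; 22; 43]],
   [:: (17, 1); (19, 2); (24, 2); (27, 2); (34, 9); (45, 1); (47, 1); (49, 2); (52, 2); (55, 9);
       (65, 6); (73, 1); (76, 3); (80, 1); (82, 7); (91, 1); (93, 5); (99, 9); (110, 5);
       (116, 4)]);
  (311, 5, 12,
   [:: [:: 124; 311; 294]; [:: 127; 310; 292]; [:: 132; 309; 288]; [:: 133; 307; 289];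
       [:: 134; 308; 287]; [:: 136; 303; 290]; [:: 140; 306; 283]; [:: 145; 305; 279];
       [:: 148; 304; 277]; [:: 156; 302; 271]; [:: 157; 300; 272]; [:: 158; 301; 270];
       [:: 160; 296; 273]; [:: 162; 299; 268]; [:: 167; 298; 264]; [:: 169; 297; 263];
       [:: 178; 295; 256]; [:: 183; 293; 253]; [:: 184; 291; 254]; [:: 187; 285; 257];
       [:: 188; 286; 255]; [:: 190; 281; 258]; [:: 198; 284; 247]; [:: 202; 282; 245];
       [:: 204; 276; 249]; [:: 280; 206; 243]; [:: 207; 278; 244]; [:: 275; 216; 238];
       [:: 274; 219; 236]; [:: 269; 220; 240]; [:: 217; 266; 246]; [:: 267; 223; 239];
       [:: 265; 230; 234]; [:: 262; 225; 242]; [:: 261; 233; 235]; [:: 260; 232; 237];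
       [:: 226; 252; 251]; [:: 259; 229; 241]; [:: 231; 250; 248]; [:: 60; 74; 109];
       [:: 65; 83; 95]; [:: 59; 86; 98]; [:: 17; 110; 116]; [:: 56; 76; 111]; [:: 53; 87; 103];
       [:: 39; 85; 119]; [:: 20; 24; 37]; [:: 55; 81; 107]; [:: 13; 23; 45]; [:: 18; 27; 36];
       [:: 14; 26; 41]],
   [:: (15, 2); (19, 1); (21, 2); (25, 1); (28, 8); (38, 1); (40, 1); (42, 3); (46, 7); (54, 1);
       (57, 2); (61, 4); (66, 8); (75, 1); (77, 4); (82, 1); (84, 1); (88, 7); (96, 2); (99, 4);
       (104, 3); (108, 1); (112, 4); (117, 2); (120, 2)]);
  (314, 5, 9,
   [:: [:: 122; 314; 293]; [:: 124; 313; 292]; [:: 126; 312; 291]; [:: 128; 311; 290];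
       [:: 134; 310; 285]; [:: 136; 309; 284]; [:: 138; 308; 283]; [:: 141; 307; 281];
       [:: 144; 306; 279]; [:: 146; 305; 278]; [:: 147; 302; 280]; [:: 151; 304; 274];
       [:: 152; 301; 276]; [:: 161; 303; 265]; [:: 163; 300; 266]; [:: 164; 298; 267];
       [:: 165; 296; 268]; [:: 167; 299; 263]; [:: 169; 289; 271]; [:: 170; 297; 262];
       [:: 172; 288; 269]; [:: 175; 295; 259]; [:: 177; 294; 258]; [:: 182; 287; 260];
       [:: 189; 286; 254]; [:: 191; 282; 256]; [:: 195; 277; 257]; [:: 201; 275; 253];
       [:: 204; 273; 252]; [:: 207; 272; 250]; [:: 214; 264; 251]; [:: 270; 220; 239];
       [:: 261; 233; 235]; [:: 255; 234; 240]; [:: 236; 249; 244]; [:: 237; 247; 245];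
       [:: 248; 238; 243]; [:: 246; 241; 242]; [:: 54; 68; 121]; [:: 71; 76; 96];
       [:: 42; 82; 119]; [:: 73; 79; 91]; [:: 39; 97; 107]; [:: 29; 105; 109]; [:: 10; 23; 48];
       [:: 52; 74; 117]; [:: 61; 80; 102]; [:: 66; 78; 99]; [:: 36; 92; 115]],
   [:: (11, 12); (24, 5); (30, 6); (37, 2); (40, 2); (43, 5); (49, 3); (53, 1); (55, 6); (62, 4);
       (67, 1); (69, 2); (72, 1); (75, 1); (77, 1); (81, 1); (83, 8); (93, 3); (98, 1); (100, 2);
       (103, 2); (106, 1); (108, 1); (110, 5); (116, 1); (118, 1); (120, 1)]);
  (317, 5, 6,
   [:: [:: 122; 317; 290]; [:: 123; 315; 291]; [:: 127; 316; 286]; [:: 129; 313; 287];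
       [:: 131; 314; 284]; [:: 132; 312; 285]; [:: 133; 308; 288]; [:: 135; 311; 283];
       [:: 136; 304; 289]; [:: 137; 310; 282]; [:: 138; 299; 292]; [:: 139; 309; 281];
       [:: 144; 307; 278]; [:: 145; 305; 279]; [:: 157; 306; 266]; [:: 158; 303; 268];
       [:: 160; 302; 267]; [:: 163; 301; 265]; [:: 164; 296; 269]; [:: 169; 300; 260];
       [:: 173; 298; 258]; [:: 181; 297; 251]; [:: 183; 294; 252]; [:: 189; 295; 245];
       [:: 190; 293; 246]; [:: 192; 280; 257]; [:: 193; 277; 259]; [:: 195; 273; 261];
       [:: 200; 276; 253]; [:: 201; 274; 254]; [:: 209; 272; 248]; [:: 275; 212; 242];
       [:: 271; 228; 230]; [:: 215; 270; 244]; [:: 216; 264; 249]; [:: 219; 263; 247];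
       [:: 262; 227; 240]; [:: 256; 236; 237]; [:: 255; 235; 239]; [:: 250; 238; 241]; [:: 243];
       [:: 15; 24; 42]; [:: 43; 79; 121]; [:: 50; 85; 108]; [:: 62; 70; 111]; [:: 48; 83; 112];
       [:: 16; 107; 120]; [:: 28; 99; 116]; [:: 34; 104; 105]; [:: 7; 74]; [:: 8; 13; 60];
       [:: 31; 98; 114]; [:: 51; 86; 106]; [:: 53; 80; 110]; [:: 27; 54]],
   [:: (9, 4); (14, 1); (17, 7); (25, 2); (29, 2); (32, 2); (35, 7); (44, 4); (49, 1); (52, 1);
       (55, 5); (61, 1); (63, 7); (71, 3); (75, 4); (81, 2); (84, 1); (87, 11); (100, 4);
       (109, 1); (113, 1); (115, 1); (117, 3)]);
  (320, 5, 3,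
   [:: [:: 122; 320; 287]; [:: 124; 319; 286]; [:: 128; 318; 283]; [:: 133; 317; 279];
       [:: 141; 316; 272]; [:: 142; 314; 273]; [:: 146; 315; 268]; [:: 147; 313; 269];
       [:: 148; 311; 270]; [:: 149; 309; 271]; [:: 150; 312; 267]; [:: 151; 304; 274];
       [:: 154; 310; 265]; [:: 157; 308; 264]; [:: 161; 307; 261]; [:: 163; 306; 260];
       [:: 164; 303; 262]; [:: 167; 305; 257]; [:: 168; 302; 259]; [:: 169; 297; 263];
       [:: 171; 300; 258]; [:: 174; 301; 254]; [:: 178; 299; 252]; [:: 179; 295; 255];
       [:: 181; 298; 250]; [:: 182; 296; 251]; [:: 185; 291; 253]; [:: 190; 294; 245];
       [:: 293; 194; 242]; [:: 292; 196; 241]; [:: 195; 290; 244]; [:: 289; 197; 243];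
       [:: 288; 211; 230]; [:: 198; 284; 247]; [:: 199; 282; 248]; [:: 200; 280; 249];
       [:: 285; 220; 224]; [:: 281; 210; 238]; [:: 278; 214; 237]; [:: 277; 216; 236];
       [:: 276; 213; 240]; [:: 275; 221; 233]; [:: 266; 229; 234]; [:: 227; 256; 246];
       [:: 64; 69; 110]; [:: 5; 27; 49]; [:: 19; 29; 33]; [:: 62; 79; 102]; [:: 53; 93; 97];
       [:: 74; 80; 89]; [:: 46; 82; 115]; [:: 48; 94; 101]; [:: 7; 9; 65]; [:: 14; 23; 44];
       [:: 72; 76; 95]; [:: 61; 86; 96]; [:: 6; 30; 45]; [:: 32; 92; 119]; [:: 47; 75; 121];
       [:: 10; 13; 58]; [:: 16; 22; 43]],
   [:: (4, 1); (8, 1); (11, 2); (15, 1); (17, 2); (20, 2); (24, 3); (28, 1); (31, 1); (34, 9);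
       (50, 3); (54, 4); (59, 2); (63, 1); (66, 3); (70, 2); (73, 1); (77, 2); (81, 1); (83, 3);
       (87, 2); (90, 2); (98, 3); (103, 7); (111, 4); (116, 3); (120, 1)]);
  (323, 5, 0,
   [:: [:: 122; 323; 284]; [:: 124; 322; 283]; [:: 125; 319; 285]; [:: 128; 321; 280];
       [:: 129; 318; 282]; [:: 132; 320; 277]; [:: 134; 317; 278]; [:: 136; 314; 279];
       [:: 140; 316; 273]; [:: 142; 315; 272]; [:: 144; 311; 274]; [:: 145; 313; 271];
       [:: 147; 312; 270]; [:: 149; 305; 275]; [:: 150; 310; 269]; [:: 151; 302; 276];
       [:: 152; 309; 268]; [:: 158; 308; 263]; [:: 160; 307; 262]; [:: 161; 304; 264];
       [:: 163; 306; 260]; [:: 164; 300; 265]; [:: 172; 303; 254]; [:: 173; 301; 255];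
       [:: 177; 299; 253]; [:: 178; 295; 256]; [:: 183; 298; 248]; [:: 184; 296; 249];
       [:: 185; 294; 250]; [:: 186; 292; 251]; [:: 187; 290; 252]; [:: 188; 297; 244];
       [:: 189; 293; 247]; [:: 291; 208; 230]; [:: 289; 202; 238]; [:: 288; 199; 242];
       [:: 287; 220; 222]; [:: 286; 207; 236]; [:: 281; 209; 239]; [:: 212; 259; 258];
       [:: 216; 267; 246]; [:: 266; 231; 232]; [:: 223; 261; 245]; [:: 257; 235; 237]; [:: 243];
       [:: 58; 71; 114]; [:: 27; 54]; [:: 31; 94; 118]; [:: 57; 83; 103]; [:: 65; 80; 98];
       [:: 70; 82; 91]; [:: 35; 93; 115]; [:: 56; 66; 121]; [:: 1; 5; 21]; [:: 23; 101; 119];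
       [:: 55; 79; 109]; [:: 36; 96; 111]; [:: 59; 85; 99]; [:: 44; 92; 107]; [:: 6; 34; 41];
       [:: 8; 13; 60]; [:: 4; 11; 12]; [:: 7; 20]],
   [:: (2, 2); (9, 2); (14, 6); (22, 1); (24, 3); (28, 3); (32, 2); (37, 4); (42, 2); (45, 9);
       (61, 4); (67, 3); (72, 7); (81, 1); (84, 1); (86, 5); (95, 1); (97, 1); (100, 1);
       (102, 1); (104, 3); (108, 1); (110, 1); (112, 2); (116, 2); (120, 1)]);
  (326, 5, 24,
   [:: [:: 123; 326; 280]; [:: 125; 325; 279]; [:: 126; 322; 281]; [:: 127; 324; 278];
       [:: 128; 319; 282]; [:: 129; 323; 277]; [:: 131; 315; 283]; [:: 133; 321; 275];
       [:: 136; 320; 273]; [:: 139; 318; 272]; [:: 140; 313; 276]; [:: 142; 317; 270];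
       [:: 144; 316; 269]; [:: 146; 312; 271]; [:: 147; 314; 268]; [:: 149; 306; 274];
       [:: 150; 295; 284]; [:: 153; 311; 265]; [:: 156; 310; 263]; [:: 160; 309; 260];
       [:: 161; 307; 261]; [:: 165; 308; 256]; [:: 167; 305; 257]; [:: 169; 302; 258];
       [:: 170; 304; 255]; [:: 174; 303; 252]; [:: 175; 301; 253]; [:: 182; 300; 247];
       [:: 183; 298; 248]; [:: 186; 299; 244]; [:: 187; 297; 245]; [:: 189; 294; 246];
       [:: 296; 197; 236]; [:: 190; 290; 249]; [:: 293; 205; 231]; [:: 292; 200; 237];
       [:: 291; 210; 228]; [:: 289; 211; 229]; [:: 288; 219; 222]; [:: 287; 216; 226];
       [:: 286; 213; 230]; [:: 285; 221; 223]; [:: 267; 227; 235]; [:: 266; 224; 239];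
       [:: 220; 259; 250]; [:: 264; 232; 233]; [:: 262; 225; 242]; [:: 254; 234; 241];
       [:: 251; 238; 240]; [:: 243]; [:: 33; 90; 120]; [:: 46; 96; 101]; [:: 61; 78; 104];
       [:: 53; 83; 107]; [:: 56; 69; 118]; [:: 38; 93; 112]; [:: 74; 82; 87]; [:: 57; 76; 110];
       [:: 60; 68; 115]; [:: 43; 97; 103]; [:: 32; 94; 117]; [:: 54; 73; 116]; [:: 30; 99; 114];
       [:: 27]],
   [:: (25, 2); (28, 2); (31, 1); (34, 4); (39, 4); (44, 2); (47, 6); (55, 1); (58, 2); (62, 6);
       (70, 3); (75, 1); (77, 1); (79, 3); (84, 3); (88, 2); (91, 2); (95, 1); (98, 1); (100, 1);
       (102, 1); (105, 2); (108, 2); (111, 1); (113, 1); (119, 1); (121, 1)]);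
  (329, 5, 21,
   [:: [:: 126; 329; 274]; [:: 128; 328; 273]; [:: 129; 325; 275]; [:: 130; 327; 272];
       [:: 131; 322; 276]; [:: 132; 326; 271]; [:: 133; 319; 277]; [:: 134; 317; 278];
       [:: 136; 324; 269]; [:: 137; 313; 279]; [:: 138; 323; 268]; [:: 142; 321; 266];
       [:: 143; 316; 270]; [:: 144; 320; 265]; [:: 145; 304; 280]; [:: 146; 302; 281];
       [:: 148; 318; 263]; [:: 149; 298; 282]; [:: 151; 314; 264]; [:: 152; 315; 262];
       [:: 153; 309; 267]; [:: 155; 291; 283]; [:: 156; 312; 261]; [:: 162; 311; 256];
       [:: 166; 310; 253]; [:: 167; 308; 254]; [:: 168; 306; 255]; [:: 171; 307; 251];
       [:: 176; 305; 248]; [:: 177; 303; 249]; [:: 180; 299; 250]; [:: 181; 301; 247];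
       [:: 183; 300; 246]; [:: 188; 297; 244]; [:: 296; 192; 241]; [:: 295; 197; 237];
       [:: 294; 199; 236]; [:: 293; 202; 234]; [:: 292; 206; 231]; [:: 290; 207; 232];
       [:: 289; 210; 230]; [:: 288; 203; 238]; [:: 287; 216; 226]; [:: 286; 219; 224];
       [:: 285; 217; 227]; [:: 284; 222; 223]; [:: 225; 259; 245]; [:: 260; 229; 240];
       [:: 258; 228; 243]; [:: 257; 233; 239]; [:: 252; 235; 242]; [:: 60; 72; 111];
       [:: 36; 94; 113]; [:: 75; 77; 91]; [:: 33; 95; 115]; [:: 51; 87; 105]; [:: 26; 100; 117];
       [:: 63; 81; 99]; [:: 41; 92; 110]; [:: 66; 76; 101]; [:: 55; 90; 98]; [:: 40; 97; 106];
       [:: 37; 44]; [:: 62; 67; 114]; [:: 24; 107; 112]; [:: 46; 88; 109]; [:: 27]],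
   [:: (22, 2); (25, 1); (28, 5); (34, 2); (38, 2); (42, 2); (45, 1); (47, 4); (52, 3); (56, 4);
       (61, 1); (64, 2); (68, 4); (73, 2); (78, 3); (82, 5); (89, 1); (93, 1); (96, 1); (102, 3);
       (108, 1); (116, 1); (118, 4)]);
  (332, 5, 18,
   [:: [:: 122; 332; 275]; [:: 123; 330; 276]; [:: 124; 331; 274]; [:: 127; 329; 273];
       [:: 128; 324; 277]; [:: 129; 328; 272]; [:: 130; 321; 278]; [:: 132; 327; 270];
       [:: 134; 326; 269]; [:: 136; 325; 268]; [:: 138; 320; 271]; [:: 142; 323; 264];
       [:: 143; 319; 267]; [:: 144; 322; 263]; [:: 145; 318; 266]; [:: 146; 304; 279];
       [:: 147; 317; 265]; [:: 149; 300; 280]; [:: 151; 316; 262]; [:: 154; 315; 260];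
       [:: 155; 313; 261]; [:: 156; 314; 259]; [:: 159; 312; 258]; [:: 160; 288; 281];
       [:: 161; 311; 257]; [:: 162; 285; 282]; [:: 167; 310; 252]; [:: 168; 308; 253];
       [:: 169; 309; 251]; [:: 173; 307; 249]; [:: 175; 306; 248]; [:: 178; 305; 246];
       [:: 179; 303; 247]; [:: 181; 298; 250]; [:: 183; 302; 244]; [:: 301; 189; 239];
       [:: 299; 195; 235]; [:: 297; 191; 241]; [:: 296; 196; 237]; [:: 295; 201; 233];
       [:: 294; 197; 238]; [:: 293; 207; 229]; [:: 292; 215; 222]; [:: 291; 212; 226];
       [:: 290; 218; 221]; [:: 289; 208; 232]; [:: 287; 214; 228]; [:: 286; 216; 227];
       [:: 284; 220; 225]; [:: 283; 210; 236]; [:: 256; 231; 242]; [:: 230; 254; 245];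
       [:: 255; 234; 240]; [:: 243]; [:: 52; 75; 116]; [:: 60; 83; 100]; [:: 70; 76; 97];
       [:: 54; 74; 115]; [:: 29; 94; 120]; [:: 65; 82; 96]; [:: 42; 87; 114]; [:: 22; 28; 31];
       [:: 23; 99; 121]; [:: 21; 25; 35]; [:: 64; 81; 98]; [:: 62; 68; 113]; [:: 48; 84; 111];
       [:: 33; 101; 109]; [:: 47; 89; 107]; [:: 46; 92; 105]; [:: 36; 88; 119]; [:: 27]],
   [:: (19, 2); (24, 1); (26, 1); (30, 1); (32, 1); (34, 1); (37, 5); (43, 3); (49, 3); (53, 1);
       (55, 5); (61, 1); (63, 1); (66, 2); (69, 1); (71, 3); (77, 4); (85, 2); (90, 2); (93, 1);
       (95, 1); (102, 3); (106, 1); (108, 1); (110, 1); (112, 1); (117, 2)]);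
  (335, 5, 15,
   [:: [:: 122; 335; 272]; [:: 123; 333; 273]; [:: 124; 334; 271]; [:: 127; 332; 270];
       [:: 128; 327; 274]; [:: 129; 331; 269]; [:: 130; 324; 275]; [:: 134; 330; 265];
       [:: 135; 328; 266]; [:: 136; 329; 264]; [:: 139; 323; 267]; [:: 140; 326; 263];
       [:: 142; 325; 262]; [:: 143; 318; 268]; [:: 145; 308; 276]; [:: 146; 322; 261];
       [:: 147; 305; 277]; [:: 148; 321; 260]; [:: 150; 320; 259]; [:: 151; 300; 278];
       [:: 155; 319; 255]; [:: 156; 317; 256]; [:: 158; 314; 257]; [:: 159; 316; 254];
       [:: 160; 311; 258]; [:: 161; 315; 253]; [:: 162; 288; 279]; [:: 165; 284; 280];
       [:: 166; 282; 281]; [:: 168; 313; 248]; [:: 169; 310; 250]; [:: 170; 312; 247];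
       [:: 172; 306; 251]; [:: 173; 307; 249]; [:: 309; 183; 237]; [:: 304; 184; 241];
       [:: 303; 187; 239]; [:: 302; 191; 236]; [:: 301; 188; 240]; [:: 299; 196; 234];
       [:: 298; 193; 238]; [:: 297; 190; 242]; [:: 296; 200; 233]; [:: 295; 203; 231];
       [:: 294; 208; 227]; [:: 293; 201; 235]; [:: 292; 217; 220]; [:: 194; 289; 246];
       [:: 291; 216; 222]; [:: 290; 210; 229]; [:: 287; 219; 223]; [:: 286; 215; 228];
       [:: 285; 214; 230]; [:: 202; 283; 244]; [:: 232; 252; 245]; [:: 243]; [:: 33; 97; 113];
       [:: 26; 98; 119]; [:: 43; 92; 108]; [:: 56; 78; 109]; [:: 75; 83; 85]; [:: 60; 88; 95];
       [:: 59; 81; 103]; [:: 20; 21; 40]; [:: 41; 87; 115]; [:: 49; 73; 121]; [:: 55; 84; 104];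
       [:: 52; 71; 120]; [:: 53; 74; 116]; [:: 70; 77; 96]; [:: 47; 82; 114]; [:: 35; 101; 107];
       [:: 50; 93; 100]; [:: 16; 23; 42]; [:: 24; 28; 29]; [:: 27]],
   [:: (17, 3); (22, 1); (25, 1); (30, 3); (34, 1); (36, 4); (44, 3); (48, 1); (51, 1); (54, 1);
       (57, 2); (61, 9); (72, 1); (76, 1); (79, 2); (86, 1); (89, 3); (94, 1); (99, 1); (102, 1);
       (105, 2); (110, 3); (117, 2)]);
  (338, 5, 14,
   [:: [:: 122; 338; 269]; [:: 124; 337; 268]; [:: 125; 334; 270]; [:: 126; 336; 267];
       [:: 127; 331; 271]; [:: 128; 335; 266]; [:: 129; 328; 272]; [:: 131; 333; 265];
       [:: 132; 324; 273]; [:: 134; 332; 263]; [:: 135; 330; 264]; [:: 136; 319; 274];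
       [:: 138; 329; 262]; [:: 139; 315; 275]; [:: 140; 313; 276]; [:: 141; 327; 261];
       [:: 143; 326; 260]; [:: 144; 308; 277]; [:: 145; 325; 259]; [:: 147; 304; 278];
       [:: 150; 323; 256]; [:: 151; 321; 257]; [:: 152; 322; 255]; [:: 154; 317; 258];
       [:: 156; 320; 253]; [:: 157; 318; 254]; [:: 159; 291; 279]; [:: 160; 289; 280];
       [:: 161; 316; 252]; [:: 164; 284; 281]; [:: 168; 314; 247]; [:: 172; 312; 245];
       [:: 174; 311; 244]; [:: 175; 306; 248]; [:: 310; 177; 242]; [:: 309; 179; 241];
       [:: 178; 305; 246]; [:: 307; 182; 240]; [:: 181; 299; 249]; [:: 303; 183; 243];
       [:: 302; 190; 237]; [:: 301; 193; 235]; [:: 185; 294; 250]; [:: 300; 195; 234];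
       [:: 298; 200; 231]; [:: 297; 194; 238]; [:: 296; 197; 236]; [:: 295; 202; 232];
       [:: 293; 216; 220]; [:: 292; 208; 229]; [:: 290; 217; 222]; [:: 196; 282; 251];
       [:: 288; 215; 226]; [:: 287; 218; 224]; [:: 286; 213; 230]; [:: 285; 211; 233];
       [:: 283; 207; 239]; [:: 60; 79; 104]; [:: 48; 87; 108]; [:: 50; 84; 109];
       [:: 26; 99; 118]; [:: 19; 21; 41]; [:: 61; 68; 114]; [:: 62; 64; 117]; [:: 32; 49];
       [:: 53; 69; 121]; [:: 27; 105; 111]; [:: 47; 96; 100]; [:: 36; 91; 116]; [:: 43; 98; 102];
       [:: 17; 107; 119]; [:: 71; 83; 89]; [:: 25; 103; 115]; [:: 75; 82; 86]; [:: 58; 92; 93];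
       [:: 65; 66; 112]; [:: 23; 28; 30]; [:: 35; 46]],
   [:: (15, 2); (18, 1); (20, 1); (22, 1); (24, 1); (29, 1); (31, 1); (33, 2); (37, 4); (42, 1);
       (44, 2); (51, 2); (54, 4); (59, 1); (63, 1); (67, 1); (70, 1); (72, 3); (76, 3); (80, 2);
       (85, 1); (88, 1); (90, 1); (94, 2); (97, 1); (101, 1); (106, 1); (110, 1); (113, 1);
       (120, 1)]);
  (341, 5, 17,
   [:: [:: 122; 341; 266]; [:: 123; 339; 267]; [:: 124; 340; 265]; [:: 125; 336; 268];
       [:: 126; 334; 269]; [:: 128; 338; 263]; [:: 131; 337; 261]; [:: 132; 335; 262];
       [:: 133; 332; 264]; [:: 135; 324; 270]; [:: 136; 333; 260]; [:: 137; 321; 271];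
       [:: 138; 319; 272]; [:: 140; 331; 258]; [:: 142; 330; 257]; [:: 144; 329; 256];
       [:: 145; 325; 259]; [:: 146; 328; 255]; [:: 148; 327; 254]; [:: 149; 307; 273];
       [:: 151; 326; 252]; [:: 152; 303; 274]; [:: 153; 323; 253]; [:: 154; 300; 275];
       [:: 155; 298; 276]; [:: 157; 322; 250]; [:: 158; 320; 251]; [:: 159; 293; 277];
       [:: 160; 291; 278]; [:: 161; 289; 279]; [:: 162; 318; 249]; [:: 164; 285; 280];
       [:: 166; 282; 281]; [:: 167; 317; 245]; [:: 168; 315; 246]; [:: 316; 173; 240];
       [:: 170; 312; 247]; [:: 314; 174; 241]; [:: 313; 182; 234]; [:: 311; 176; 242];
       [:: 175; 310; 244]; [:: 309; 185; 235]; [:: 308; 188; 233]; [:: 306; 192; 231];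
       [:: 305; 195; 229]; [:: 304; 189; 236]; [:: 302; 190; 237]; [:: 301; 196; 232];
       [:: 299; 205; 225]; [:: 297; 210; 222]; [:: 296; 209; 224]; [:: 295; 213; 221];
       [:: 294; 216; 219]; [:: 292; 199; 238]; [:: 290; 211; 228]; [:: 288; 214; 227];
       [:: 198; 283; 248]; [:: 287; 203; 239]; [:: 286; 217; 226]; [:: 284; 215; 230]; [:: 243];
       [:: 54; 69; 120]; [:: 53; 91; 99]; [:: 21; 101; 121]; [:: 51; 84; 108]; [:: 68; 86; 89];
       [:: 67; 79; 97]; [:: 22; 26; 33]; [:: 40; 98; 105]; [:: 75; 83; 85]; [:: 48; 88; 107];
       [:: 45; 81; 117]; [:: 38; 90; 115]; [:: 32; 92; 119]; [:: 27; 106; 110]; [:: 73; 76; 94];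
       [:: 58; 82; 103]; [:: 55; 77; 111]; [:: 24; 28; 29]; [:: 34; 47]; [:: 61; 70; 112];
       [:: 30; 95; 118]; [:: 18; 19; 44]],
   [:: (20, 1); (23, 1); (25, 1); (31, 1); (35, 3); (39, 1); (41, 3); (46, 1); (49, 2); (52, 1);
       (56, 2); (59, 2); (62, 5); (71, 2); (74, 1); (78, 1); (80, 1); (87, 1); (93, 1); (96, 1);
       (100, 1); (102, 1); (104, 1); (109, 1); (113, 2); (116, 1)]);
  (344, 5, 20,
   [:: [:: 123; 344; 262]; [:: 124; 342; 263]; [:: 125; 343; 261]; [:: 126; 339; 264];
       [:: 127; 337; 265]; [:: 128; 341; 260]; [:: 129; 334; 266]; [:: 130; 340; 259];
       [:: 131; 331; 267]; [:: 132; 329; 268]; [:: 133; 338; 258]; [:: 135; 325; 269];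
       [:: 136; 336; 257]; [:: 137; 322; 270]; [:: 138; 335; 256]; [:: 139; 319; 271];
       [:: 140; 317; 272]; [:: 141; 333; 255]; [:: 143; 332; 254]; [:: 144; 312; 273];
       [:: 145; 310; 274]; [:: 146; 330; 253]; [:: 147; 307; 275]; [:: 148; 305; 276];
       [:: 149; 328; 252]; [:: 150; 302; 277]; [:: 151; 327; 251]; [:: 152; 299; 278];
       [:: 154; 326; 249]; [:: 155; 324; 250]; [:: 156; 294; 279]; [:: 159; 323; 247];
       [:: 160; 289; 280]; [:: 161; 286; 282]; [:: 162; 284; 283]; [:: 163; 285; 281];
       [:: 164; 321; 244]; [:: 320; 167; 242]; [:: 318; 170; 241]; [:: 168; 316; 245];
       [:: 315; 174; 240]; [:: 314; 177; 238]; [:: 172; 311; 246]; [:: 313; 179; 237];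
       [:: 175; 306; 248]; [:: 309; 186; 234]; [:: 308; 190; 231]; [:: 304; 192; 233];
       [:: 303; 194; 232]; [:: 301; 198; 230]; [:: 300; 204; 225]; [:: 298; 196; 235];
       [:: 297; 210; 222]; [:: 296; 206; 227]; [:: 295; 205; 229]; [:: 293; 208; 228];
       [:: 292; 213; 224]; [:: 291; 199; 239]; [:: 290; 203; 236]; [:: 288; 218; 223];
       [:: 287; 216; 226]; [:: 243]; [:: 53; 71; 119]; [:: 40; 92; 111]; [:: 38; 100; 105];
       [:: 47; 97; 99]; [:: 64; 81; 98]; [:: 73; 82; 88]; [:: 37; 93; 113]; [:: 75; 79; 89];
       [:: 25; 104; 114]; [:: 68; 80; 95]; [:: 66; 69; 108]; [:: 27; 106; 110];
       [:: 21; 102; 120]; [:: 44; 84; 115]; [:: 35; 96; 112]; [:: 33; 94; 116]; [:: 39; 87; 117];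
       [:: 49; 76; 118]; [:: 57; 83; 103]; [:: 45; 91; 107]; [:: 30; 51]],
   [:: (22, 3); (26, 1); (28, 2); (31, 2); (34, 1); (36, 1); (41, 3); (46, 1); (48, 1); (50, 1);
       (52, 1); (54, 3); (58, 6); (65, 1); (67, 1); (70, 1); (72, 1); (74, 1); (77, 2); (85, 2);
       (90, 1); (101, 1); (109, 1); (121, 1)]);
  (347, 5, 23,
   [:: [:: 122; 347; 260]; [:: 124; 346; 259]; [:: 125; 343; 261]; [:: 126; 345; 258];
       [:: 127; 340; 262]; [:: 128; 344; 257]; [:: 129; 337; 263]; [:: 130; 335; 264];
       [:: 131; 342; 256]; [:: 132; 332; 265]; [:: 133; 341; 255]; [:: 134; 329; 266];
       [:: 135; 327; 267]; [:: 136; 339; 254]; [:: 137; 324; 268]; [:: 138; 338; 253];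
       [:: 139; 321; 269]; [:: 141; 336; 252]; [:: 142; 317; 270]; [:: 143; 315; 271];
       [:: 144; 334; 251]; [:: 145; 312; 272]; [:: 146; 333; 250]; [:: 147; 309; 273];
       [:: 148; 307; 274]; [:: 149; 331; 249]; [:: 150; 304; 275]; [:: 151; 330; 248];
       [:: 152; 301; 276]; [:: 153; 299; 277]; [:: 154; 328; 247]; [:: 155; 296; 278];
       [:: 156; 294; 279]; [:: 157; 326; 246]; [:: 158; 291; 280]; [:: 160; 325; 244];
       [:: 161; 286; 282]; [:: 162; 284; 283]; [:: 323; 164; 242]; [:: 163; 285; 281];
       [:: 322; 167; 240]; [:: 320; 170; 239]; [:: 319; 169; 241]; [:: 318; 173; 238];
       [:: 316; 179; 234]; [:: 171; 313; 245]; [:: 314; 180; 235]; [:: 311; 182; 236];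
       [:: 310; 188; 231]; [:: 308; 193; 228]; [:: 306; 196; 227]; [:: 305; 195; 229];
       [:: 303; 201; 225]; [:: 302; 204; 223]; [:: 300; 212; 217]; [:: 298; 198; 233];
       [:: 297; 206; 226]; [:: 295; 216; 218]; [:: 293; 214; 222]; [:: 292; 213; 224];
       [:: 290; 207; 232]; [:: 289; 210; 230]; [:: 288; 220; 221]; [:: 287; 205; 237]; [:: 243];
       [:: 30; 99; 114]; [:: 33; 92; 118]; [:: 73; 83; 87]; [:: 72; 85; 86]; [:: 29; 95; 119];
       [:: 42; 89; 112]; [:: 38; 94; 111]; [:: 25; 102; 116]; [:: 45; 81; 117]; [:: 37; 93; 113];
       [:: 36; 97; 110]; [:: 55; 80; 108]; [:: 48; 88; 107]; [:: 47; 91; 105]; [:: 27; 101; 115];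
       [:: 39; 98; 106]; [:: 63; 76; 104]; [:: 74; 79; 90]; [:: 61; 82; 100]; [:: 26; 96; 121];
       [:: 64; 70; 109]; [:: 31; 50]],
   [:: (24, 1); (28, 1); (32, 1); (34, 2); (40, 2); (43, 2); (46, 1); (49, 1); (51, 4); (56, 5);
       (62, 1); (65, 5); (71, 1); (75, 1); (77, 2); (84, 1); (103, 1); (120, 1)]);
  (350, 5, 26,
   [:: [:: 127; 252; 350]; [:: 157; 223; 349]; [:: 154; 228; 347]; [:: 143; 238; 348];
       [:: 170; 214; 345]; [:: 141; 249; 339]; [:: 125; 262; 342]; [:: 130; 255; 344];
       [:: 132; 259; 338]; [:: 162; 221; 346]; [:: 168; 218; 343]; [:: 171; 226; 332];
       [:: 182; 211; 336]; [:: 153; 235; 341]; [:: 142; 256; 331]; [:: 135; 260; 334];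
       [:: 148; 241; 340]; [:: 151; 253; 325]; [:: 159; 240; 330]; [:: 150; 242; 337];
       [:: 163; 237; 329]; [:: 133; 263; 333]; [:: 180; 227; 322]; [:: 177; 225; 327];
       [:: 147; 254; 328]; [:: 174; 220; 335]; [:: 172; 236; 321]; [:: 122; 284; 323];
       [:: 123; 299; 307]; [:: 167; 251; 311]; [:: 145; 266; 318]; [:: 129; 274; 326];
       [:: 193; 222; 314]; [:: 139; 273; 317]; [:: 204; 206; 319]; [:: 137; 272; 320];
       [:: 128; 300; 301]; [:: 144; 261; 324]; [:: 146; 280; 303]; [:: 197; 219; 313];
       [:: 134; 279; 316]; [:: 166; 258; 305]; [:: 190; 224; 315]; [:: 136; 281; 312];
       [:: 169; 250; 310]; [:: 205; 233; 291]; [:: 189; 248; 292]; [:: 158; 278; 293];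
       [:: 217; 229; 283]; [:: 160; 265; 304]; [:: 201; 230; 298]; [:: 231; 234; 264];
       [:: 152; 287; 290]; [:: 138; 282; 309]; [:: 212; 247; 270]; [:: 164; 271; 294];
       [:: 195; 232; 302]; [:: 183; 257; 289]; [:: 184; 239; 306]; [:: 155; 286; 288];
       [:: 156; 277; 296]; [:: 176; 268; 285]; [:: 175; 246; 308]; [:: 187; 267; 275];
       [:: 165; 269; 295]; [:: 188; 244; 297]; [:: 208; 245; 276]; [:: 243]; [:: 84; 48; 111];
       [:: 95; 39; 109]; [:: 78; 50; 115]; [:: 56; 116; 71]; [:: 108; 97; 38]; [:: 60; 106; 77];
       [:: 87; 80; 76]; [:: 61; 86; 96]; [:: 67; 69; 107]; [:: 74; 79; 90]; [:: 98; 72; 73];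
       [:: 75; 102; 66]; [:: 99; 81; 63]; [:: 91; 121; 31]; [:: 83; 101; 59]; [:: 53; 85; 105];
       [:: 104; 29; 110]; [:: 113; 88; 42]; [:: 93; 32; 118]; [:: 89; 54; 100]; [:: 114; 37; 92];
       [:: 120; 68; 55]; [:: 35; 46]],
   [:: (27, 2); (30, 1); (33, 2); (36, 1); (40, 2); (43, 3); (47, 1); (49, 1); (51, 2); (57, 2);
       (62, 1); (64, 2); (70, 1); (82, 1); (94, 1); (103, 1); (112, 1); (117, 1); (119, 1)]);
  (353, 5, 29,
   [:: [:: 151; 227; 351]; [:: 182; 195; 352]; [:: 181; 198; 350]; [:: 145; 231; 353];
       [:: 159; 224; 346]; [:: 161; 219; 349]; [:: 138; 246; 345]; [:: 189; 193; 347];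
       [:: 168; 217; 344]; [:: 174; 207; 348]; [:: 175; 214; 340]; [:: 150; 240; 339];
       [:: 154; 233; 342]; [:: 134; 254; 341]; [:: 157; 229; 343]; [:: 147; 244; 338];
       [:: 140; 252; 337]; [:: 136; 259; 334]; [:: 163; 241; 325]; [:: 142; 251; 336];
       [:: 180; 222; 327]; [:: 124; 276; 329]; [:: 133; 266; 330]; [:: 164; 234; 331];
       [:: 197; 206; 326]; [:: 131; 270; 328]; [:: 166; 230; 333]; [:: 122; 293; 314];
       [:: 123; 295; 311]; [:: 127; 294; 308]; [:: 125; 269; 335]; [:: 129; 268; 332];
       [:: 137; 275; 317]; [:: 172; 242; 315]; [:: 158; 253; 318]; [:: 170; 238; 321];
       [:: 184; 225; 320]; [:: 152; 255; 322]; [:: 135; 278; 316]; [:: 132; 298; 299];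
       [:: 192; 232; 305]; [:: 146; 271; 312]; [:: 162; 248; 319]; [:: 139; 280; 310];
       [:: 165; 258; 306]; [:: 205; 221; 303]; [:: 160; 265; 304]; [:: 190; 257; 282];
       [:: 179; 263; 287]; [:: 204; 216; 309]; [:: 202; 235; 292]; [:: 156; 250; 323];
       [:: 149; 279; 301]; [:: 141; 288; 300]; [:: 201; 247; 281]; [:: 148; 284; 297];
       [:: 143; 262; 324]; [:: 178; 261; 290]; [:: 185; 237; 307]; [:: 191; 249; 289];
       [:: 169; 274; 286]; [:: 196; 256; 277]; [:: 218; 228; 283]; [:: 155; 272; 302];
       [:: 173; 260; 296]; [:: 215; 223; 291]; [:: 171; 273; 285]; [:: 177; 239; 313];
       [:: 220; 245; 264]; [:: 226; 236; 267]; [:: 243]; [:: 70; 78; 95]; [:: 52; 118; 73];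
       [:: 105; 75; 63]; [:: 84; 47; 112]; [:: 93; 81; 69]; [:: 97; 50; 96]; [:: 103; 86; 54];
       [:: 58; 65; 120]; [:: 100; 66; 77]; [:: 89; 74; 80]; [:: 51; 98; 94]; [:: 101; 104; 38];
       [:: 114; 88; 41]; [:: 87; 37; 119]; [:: 106; 46; 91]; [:: 107; 64; 72]; [:: 83; 39; 121];
       [:: 79; 62; 102]; [:: 53; 82; 108]; [:: 92; 109; 42]; [:: 71; 111; 61]; [:: 110; 48; 85];
       [:: 59; 68; 116]; [:: 36; 45]],
   [:: (30, 6); (40, 1); (43, 2); (49, 1); (55, 3); (60, 1); (67, 1); (76, 1); (90, 1); (99, 1);
       (113, 1); (115, 1); (117, 1)]);
  (356, 5, 32,
   [:: [:: 144; 233; 352]; [:: 149; 226; 354]; [:: 139; 235; 355]; [:: 142; 238; 349];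
       [:: 132; 244; 353]; [:: 179; 194; 356]; [:: 131; 247; 351]; [:: 180; 203; 346];
       [:: 156; 225; 348]; [:: 162; 223; 344]; [:: 186; 198; 345]; [:: 138; 253; 338];
       [:: 145; 241; 343]; [:: 165; 214; 350]; [:: 140; 242; 347]; [:: 130; 259; 340];
       [:: 122; 274; 333]; [:: 175; 220; 334]; [:: 155; 237; 337]; [:: 161; 229; 339];
       [:: 169; 232; 328]; [:: 123; 265; 341]; [:: 163; 224; 342]; [:: 181; 221; 327];
       [:: 133; 261; 335]; [:: 184; 213; 332]; [:: 127; 266; 336]; [:: 124; 276; 329];
       [:: 129; 284; 316]; [:: 135; 264; 330]; [:: 153; 258; 318]; [:: 137; 271; 321];
       [:: 159; 248; 322]; [:: 143; 262; 324]; [:: 125; 273; 331]; [:: 195; 219; 315];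
       [:: 176; 236; 317]; [:: 134; 291; 304]; [:: 126; 283; 320]; [:: 178; 252; 299];
       [:: 128; 289; 312]; [:: 168; 260; 301]; [:: 147; 277; 305]; [:: 158; 279; 292];
       [:: 150; 270; 309]; [:: 157; 282; 290]; [:: 136; 267; 326]; [:: 190; 246; 293];
       [:: 191; 227; 311]; [:: 200; 231; 298]; [:: 189; 217; 323]; [:: 173; 275; 281];
       [:: 166; 269; 294]; [:: 211; 218; 300]; [:: 201; 240; 288]; [:: 160; 263; 306];
       [:: 141; 286; 302]; [:: 164; 255; 310]; [:: 197; 254; 278]; [:: 215; 234; 280];
       [:: 206; 209; 314]; [:: 204; 230; 295]; [:: 216; 256; 257]; [:: 154; 272; 303];
       [:: 170; 251; 308]; [:: 172; 250; 307]; [:: 188; 245; 296]; [:: 205; 239; 285];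
       [:: 148; 268; 313]; [:: 193; 249; 287]; [:: 182; 228; 319]; [:: 210; 222; 297];
       [:: 192; 212; 325]; [:: 243]; [:: 51; 107; 85]; [:: 109; 100; 34]; [:: 84; 95; 64];
       [:: 105; 65; 73]; [:: 90; 101; 52]; [:: 63; 106; 74]; [:: 111; 49; 83]; [:: 108; 98; 37];
       [:: 75; 50; 118]; [:: 113; 88; 42]; [:: 87; 54; 102]; [:: 96; 33; 114]; [:: 45; 119; 79];
       [:: 110; 94; 39]; [:: 81; 103; 59]; [:: 89; 61; 93]; [:: 67; 121; 55]; [:: 86; 117; 40];
       [:: 57; 70; 116]; [:: 71; 104; 68]; [:: 77; 120; 46]; [:: 82; 62; 99]; [:: 112; 53; 78];
       [:: 48; 80; 115]; [:: 38; 43]],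
   [:: (35, 2); (41, 1); (44, 1); (47, 1); (56, 1); (58, 1); (60, 1); (66, 1); (69, 1); (72, 1);
       (76, 1); (91, 2); (97, 1)]);
  (359, 5, 35,
   [:: [:: 139; 233; 357]; [:: 170; 201; 358]; [:: 184; 186; 359]; [:: 149; 224; 356];
       [:: 164; 211; 354]; [:: 158; 216; 355]; [:: 152; 225; 352]; [:: 177; 202; 350];
       [:: 178; 200; 351]; [:: 169; 207; 353]; [:: 143; 238; 348]; [:: 127; 256; 346];
       [:: 179; 203; 347]; [:: 145; 239; 345]; [:: 191; 196; 342]; [:: 174; 215; 340];
       [:: 126; 260; 343]; [:: 138; 250; 341]; [:: 142; 248; 339]; [:: 175; 221; 333];
       [:: 125; 255; 349]; [:: 128; 266; 335]; [:: 140; 252; 337]; [:: 134; 251; 344];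
       [:: 136; 262; 331]; [:: 180; 217; 332]; [:: 122; 271; 336]; [:: 171; 228; 330];
       [:: 147; 253; 329]; [:: 183; 223; 323]; [:: 146; 264; 319]; [:: 135; 280; 314];
       [:: 194; 210; 325]; [:: 197; 208; 324]; [:: 154; 247; 328]; [:: 131; 272; 326];
       [:: 168; 244; 317]; [:: 204; 205; 320]; [:: 182; 213; 334]; [:: 227; 237; 265];
       [:: 153; 261; 315]; [:: 150; 270; 309]; [:: 222; 232; 275]; [:: 173; 235; 321];
       [:: 172; 245; 312]; [:: 181; 249; 299]; [:: 162; 269; 298]; [:: 156; 246; 327];
       [:: 129; 284; 316]; [:: 148; 273; 308]; [:: 163; 274; 292]; [:: 193; 218; 318];
       [:: 199; 254; 276]; [:: 219; 220; 290]; [:: 198; 234; 297]; [:: 165; 226; 338];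
       [:: 230; 236; 263]; [:: 209; 214; 306]; [:: 187; 242; 300]; [:: 229; 241; 259];
       [:: 212; 240; 277]; [:: 176; 231; 322]; [:: 159; 257; 313]; [:: 167; 268; 294];
       [:: 166; 258; 305]; [:: 161; 279; 289]; [:: 157; 285; 287]; [:: 130; 295; 304];
       [:: 132; 296; 301]; [:: 151; 267; 311]; [:: 137; 282; 310]; [:: 133; 293; 303];
       [:: 141; 286; 302]; [:: 144; 278; 307]; [:: 155; 283; 291]; [:: 160; 281; 288]; [:: 243];
       [:: 80; 103; 60]; [:: 90; 68; 85]; [:: 96; 101; 46]; [:: 81; 93; 69]; [:: 77; 88; 78];
       [:: 97; 108; 38]; [:: 40; 117; 86]; [:: 56; 95; 92]; [:: 79; 107; 57]; [:: 109; 36; 98];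
       [:: 82; 45; 116]; [:: 71; 111; 61]; [:: 87; 115; 41]; [:: 50; 118; 75]; [:: 66; 113; 64];
       [:: 110; 70; 63]; [:: 104; 74; 65]; [:: 76; 83; 84]; [:: 112; 72; 59]; [:: 100; 44; 99];
       [:: 94; 43; 106]; [:: 47; 105; 91]; [:: 121; 73; 49]; [:: 67; 62; 114]; [:: 89; 52; 102];
       [:: 39; 42]],
   [:: (37, 1); (48, 1); (51, 1); (53, 3); (58, 1); (119, 2)]);
  (362, 5, 38,
   [:: [:: 175; 193; 361]; [:: 134; 233; 362]; [:: 133; 236; 360]; [:: 125; 246; 358];
       [:: 142; 231; 356]; [:: 146; 226; 357]; [:: 170; 204; 355]; [:: 128; 242; 359];
       [:: 181; 197; 351]; [:: 168; 209; 352]; [:: 122; 253; 354]; [:: 174; 202; 353];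
       [:: 158; 224; 347]; [:: 172; 208; 349]; [:: 178; 203; 348]; [:: 123; 262; 344];
       [:: 182; 201; 346]; [:: 124; 265; 340]; [:: 166; 222; 341]; [:: 162; 225; 342];
       [:: 140; 239; 350]; [:: 130; 261; 338]; [:: 141; 252; 336]; [:: 171; 213; 345];
       [:: 155; 237; 337]; [:: 135; 255; 339]; [:: 148; 238; 343]; [:: 157; 241; 331];
       [:: 153; 247; 329]; [:: 190; 207; 332]; [:: 129; 267; 333]; [:: 183; 212; 334];
       [:: 188; 216; 325]; [:: 159; 243; 327]; [:: 136; 263; 330]; [:: 180; 214; 335];
       [:: 192; 218; 319]; [:: 189; 223; 317]; [:: 137; 272; 320]; [:: 154; 249; 326];
       [:: 145; 260; 324]; [:: 143; 273; 313]; [:: 205; 217; 307]; [:: 161; 250; 318];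
       [:: 144; 257; 328]; [:: 126; 294; 309]; [:: 127; 297; 305]; [:: 131; 296; 302];
       [:: 132; 285; 312]; [:: 165; 258; 306]; [:: 210; 248; 271]; [:: 151; 283; 295];
       [:: 176; 266; 287]; [:: 152; 256; 321]; [:: 149; 277; 303]; [:: 164; 279; 286];
       [:: 139; 290; 300]; [:: 147; 259; 323]; [:: 169; 276; 284]; [:: 138; 293; 298];
       [:: 156; 282; 291]; [:: 163; 251; 315]; [:: 167; 270; 292]; [:: 179; 234; 316];
       [:: 173; 245; 311]; [:: 184; 235; 310]; [:: 191; 264; 274]; [:: 196; 244; 289];
       [:: 186; 221; 322]; [:: 229; 232; 268]; [:: 150; 280; 299]; [:: 211; 240; 278];
       [:: 220; 228; 281]; [:: 206; 219; 304]; [:: 185; 269; 275]; [:: 194; 227; 308];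
       [:: 198; 230; 301]; [:: 200; 215; 314]; [:: 187; 254; 288]; [:: 115; 42; 86];
       [:: 60; 80; 103]; [:: 75; 116; 52]; [:: 55; 82; 106]; [:: 49; 117; 77]; [:: 79; 96; 68];
       [:: 121; 72; 50]; [:: 78; 109; 56]; [:: 40; 99; 104]; [:: 62; 73; 108]; [:: 112; 46; 85];
       [:: 119; 67; 57]; [:: 39; 90; 114]; [:: 101; 53; 89]; [:: 45; 88; 110]; [:: 41; 102; 100];
       [:: 51; 118; 74]; [:: 93; 107; 43]; [:: 94; 54; 95]; [:: 63; 69; 111]; [:: 76; 70; 97];
       [:: 113; 71; 59]; [:: 84; 98; 61]; [:: 64; 92; 87]; [:: 65; 120; 58]; [:: 47; 105; 91];
       [:: 81]],
   [:: (44, 1); (48, 1); (66, 1); (83, 1)]);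
  (731, 6, 0,
   [:: [:: 726; 731; 730]; [:: 729]; [:: 3]],
   [:: (1, 2); (4, 361)]);
  (734, 6, 3,
   [:: [:: 720; 734; 733]; [:: 732; 727; 728]; [:: 726; 731; 730]; [:: 729]; [:: 9]],
   [:: (4, 5); (10, 355)]);
  (737, 6, 0,
   [:: [:: 715; 737; 735]; [:: 736; 722; 729]; [:: 723; 734; 730]; [:: 724; 732; 731];
       [:: 733; 726; 728]; [:: 6; 7; 14]; [:: 1; 3; 5]],
   [:: (2, 1); (4, 1); (8, 6); (15, 350)]);
  (740, 6, 2,
   [:: [:: 711; 740; 736]; [:: 717; 739; 731]; [:: 738; 720; 729]; [:: 737; 723; 727];
       [:: 721; 734; 732]; [:: 722; 735; 730]; [:: 733; 726; 728]; [:: 3; 6; 18]; [:: 7; 8; 12];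
       [:: 9]],
   [:: (4, 2); (10, 2); (13, 5); (19, 346)]);
  (743, 6, 12,
   [:: [:: 702; 743; 742]; [:: 741; 718; 728]; [:: 717; 740; 730]; [:: 739; 722; 726];
       [:: 719; 736; 732]; [:: 738; 724; 725]; [:: 720; 734; 733]; [:: 737; 723; 727];
       [:: 721; 735; 731]; [:: 729]; [:: 27]],
   [:: (13, 14); (28, 337)]);
  (746, 6, 9,
   [:: [:: 699; 745; 743]; [:: 701; 746; 740]; [:: 702; 744; 741]; [:: 706; 742; 739];
       [:: 738; 721; 728]; [:: 720; 736; 731]; [:: 737; 724; 726]; [:: 722; 733; 732];
       [:: 735; 725; 727]; [:: 723; 734; 730]; [:: 729]; [:: 23; 28; 30]; [:: 27]],
   [:: (10, 13); (24, 3); (29, 1); (31, 334)]);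
  (749, 6, 6,
   [:: [:: 691; 749; 747]; [:: 696; 748; 743]; [:: 698; 745; 744]; [:: 701; 746; 740];
       [:: 709; 742; 736]; [:: 741; 717; 729]; [:: 718; 739; 730]; [:: 738; 722; 727];
       [:: 720; 735; 732]; [:: 737; 724; 726]; [:: 723; 733; 731]; [:: 734; 725; 728];
       [:: 12; 31; 38]; [:: 20; 28; 33]; [:: 7; 9; 11]],
   [:: (8, 1); (10, 1); (13, 7); (21, 7); (29, 2); (32, 1); (34, 4); (39, 326)]);
  (752, 6, 3,
   [:: [:: 686; 752; 749]; [:: 693; 751; 743]; [:: 698; 750; 739]; [:: 701; 748; 738];
       [:: 702; 745; 740]; [:: 703; 747; 737]; [:: 705; 746; 736]; [:: 711; 744; 732];
       [:: 712; 742; 733]; [:: 741; 718; 728]; [:: 735; 725; 727]; [:: 734; 724; 729];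
       [:: 726; 731; 730]; [:: 4; 5; 18]; [:: 11; 27; 43]; [:: 17; 28; 36]; [:: 24; 26; 31]],
   [:: (6, 5); (12, 5); (19, 5); (25, 1); (29, 2); (32, 4); (37, 6); (44, 321)]);
  (755, 6, 0,
   [:: [:: 679; 755; 753]; [:: 685; 754; 748]; [:: 694; 752; 741]; [:: 695; 750; 742];
       [:: 697; 751; 739]; [:: 700; 747; 740]; [:: 704; 749; 734]; [:: 705; 746; 736];
       [:: 706; 744; 737]; [:: 745; 715; 727]; [:: 713; 743; 731]; [:: 717; 738; 732];
       [:: 719; 735; 733]; [:: 730; 728; 729]; [:: 2; 29; 50]; [:: 14; 23; 44]; [:: 1; 10; 16];
       [:: 24; 25; 32]; [:: 12; 34; 35]],
   [:: (3, 7); (11, 1); (13, 1); (15, 1); (17, 6); (26, 3); (30, 2); (33, 1); (36, 8); (45, 5);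
       (51, 314)]);
  (758, 6, 6,
   [:: [:: 680; 758; 749]; [:: 685; 757; 745]; [:: 687; 756; 744]; [:: 691; 755; 741];
       [:: 698; 754; 735]; [:: 701; 753; 733]; [:: 702; 751; 734]; [:: 703; 752; 732];
       [:: 704; 747; 736]; [:: 706; 750; 731]; [:: 707; 742; 738]; [:: 748; 712; 727];
       [:: 746; 718; 723]; [:: 714; 743; 730]; [:: 740; 722; 725]; [:: 739; 720; 728];
       [:: 737; 724; 726]; [:: 729]; [:: 11; 28; 42]; [:: 15; 22; 44]; [:: 23; 27; 31];
       [:: 17; 26; 38]; [:: 7; 25; 49]; [:: 9]],
   [:: (8, 1); (10, 1); (12, 3); (16, 1); (18, 4); (24, 1); (29, 2); (32, 6); (39, 3); (43, 1);
       (45, 4); (50, 315)]);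
  (761, 6, 5,
   [:: [:: 677; 761; 749]; [:: 683; 760; 744]; [:: 689; 759; 739]; [:: 691; 758; 738];
       [:: 693; 757; 737]; [:: 694; 753; 740]; [:: 756; 702; 729]; [:: 755; 704; 728];
       [:: 703; 754; 730]; [:: 752; 708; 727]; [:: 706; 750; 731]; [:: 751; 710; 726];
       [:: 709; 743; 735]; [:: 748; 714; 725]; [:: 747; 719; 721]; [:: 746; 717; 724];
       [:: 712; 741; 734]; [:: 745; 720; 722]; [:: 713; 742; 732]; [:: 718; 736; 733];
       [:: 8; 21; 52]; [:: 7; 9; 11]; [:: 35; 46]; [:: 27]; [:: 16; 25; 40]; [:: 20; 23; 38];
       [:: 12; 15]; [:: 19; 26; 36]; [:: 10; 17]],
   [:: (6, 1); (13, 2); (18, 1); (22, 1); (24, 1); (28, 7); (37, 1); (39, 1); (41, 5); (47, 5);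
       (53, 312)]);
  (764, 6, 8,
   [:: [:: 663; 764; 760]; [:: 677; 763; 747]; [:: 684; 762; 741]; [:: 687; 761; 739];
       [:: 694; 759; 734]; [:: 696; 758; 733]; [:: 697; 755; 735]; [:: 698; 757; 732];
       [:: 699; 752; 736]; [:: 756; 702; 729]; [:: 703; 754; 730]; [:: 753; 707; 727];
       [:: 705; 744; 738]; [:: 751; 711; 725]; [:: 750; 713; 724]; [:: 749; 712; 726];
       [:: 710; 740; 737]; [:: 748; 717; 722]; [:: 746; 720; 721]; [:: 745; 719; 723];
       [:: 714; 742; 731]; [:: 743; 716; 728]; [:: 12; 27; 42]; [:: 13; 16; 52]; [:: 9; 18];
       [:: 17; 31; 33]; [:: 10; 26; 45]; [:: 15; 66]; [:: 22; 24; 35]; [:: 19; 30; 32]],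
   [:: (11, 1); (14, 1); (20, 2); (23, 1); (25, 1); (28, 2); (34, 1); (36, 6); (43, 2); (46, 6);
       (53, 13); (67, 298)]);
  (767, 6, 11,
   [:: [:: 669; 767; 751]; [:: 677; 766; 744]; [:: 682; 765; 740]; [:: 684; 764; 739];
       [:: 685; 761; 741]; [:: 686; 763; 738]; [:: 689; 762; 736]; [:: 692; 760; 735];
       [:: 693; 757; 737]; [:: 695; 759; 733]; [:: 758; 702; 727]; [:: 756; 703; 728];
       [:: 755; 706; 726]; [:: 754; 704; 729]; [:: 753; 709; 725]; [:: 752; 711; 724];
       [:: 750; 716; 721]; [:: 708; 748; 731]; [:: 749; 718; 720]; [:: 710; 743; 734];
       [:: 747; 717; 723]; [:: 746; 719; 722]; [:: 712; 745; 730]; [:: 713; 742; 732];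
       [:: 13; 16; 52]; [:: 20; 25; 36]; [:: 17; 19; 45]; [:: 12; 26; 43]; [:: 37; 44];
       [:: 21; 60]; [:: 18; 23; 40]; [:: 34; 47]; [:: 27]],
   [:: (14, 2); (22, 1); (24, 1); (28, 6); (35, 1); (38, 2); (41, 2); (46, 1); (48, 4); (53, 7);
       (61, 304)]);
  (770, 6, 14,
   [:: [:: 672; 770; 745]; [:: 673; 768; 746]; [:: 676; 769; 742]; [:: 682; 767; 738];
       [:: 684; 766; 737]; [:: 685; 763; 739]; [:: 686; 765; 736]; [:: 687; 760; 740];
       [:: 691; 764; 732]; [:: 694; 762; 731]; [:: 695; 759; 733]; [:: 761; 699; 727];
       [:: 758; 701; 728]; [:: 757; 704; 726]; [:: 756; 707; 724]; [:: 702; 744; 741];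
       [:: 755; 711; 721]; [:: 754; 713; 720]; [:: 753; 715; 719]; [:: 705; 747; 735];
       [:: 752; 717; 718]; [:: 751; 714; 722]; [:: 750; 712; 725]; [:: 708; 749; 730];
       [:: 748; 716; 723]; [:: 710; 743; 734]; [:: 729]; [:: 17; 22; 42]; [:: 15; 21; 45];
       [:: 28; 53]; [:: 25; 56]; [:: 34; 47]; [:: 38; 43]; [:: 18; 19; 44]; [:: 16; 30; 35];
       [:: 24; 57]; [:: 27]],
   [:: (20, 1); (23, 1); (26, 1); (29, 1); (31, 3); (36, 2); (39, 3); (46, 1); (48, 5); (54, 2);
       (58, 307)]);
  (773, 6, 17,
   [:: [:: 644; 773; 770]; [:: 646; 772; 769]; [:: 654; 771; 762]; [:: 670; 768; 749];
       [:: 671; 766; 750]; [:: 672; 767; 748]; [:: 682; 765; 740]; [:: 683; 763; 741];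
       [:: 687; 764; 736]; [:: 694; 761; 732]; [:: 695; 759; 733]; [:: 697; 760; 730];
       [:: 758; 701; 728]; [:: 757; 705; 725]; [:: 756; 707; 724]; [:: 702; 754; 731];
       [:: 755; 709; 723]; [:: 753; 713; 721]; [:: 752; 715; 720]; [:: 706; 742; 739];
       [:: 751; 717; 719]; [:: 708; 744; 735]; [:: 710; 743; 734]; [:: 747; 718; 722];
       [:: 746; 714; 727]; [:: 712; 738; 737]; [:: 745; 716; 726]; [:: 729]; [:: 23; 58];
       [:: 19; 20; 42]; [:: 24; 57]; [:: 35; 46]; [:: 75; 83; 85]; [:: 21; 28; 32]; [:: 34; 47];
       [:: 22; 59]; [:: 27]],
   [:: (18, 1); (25, 2); (29, 3); (33, 1); (36, 6); (43, 3); (48, 9); (60, 15); (76, 7); (84, 1);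
       (86, 279)]);
  (776, 6, 20,
   [:: [:: 640; 776; 771]; [:: 642; 775; 770]; [:: 646; 774; 767]; [:: 651; 773; 763];
       [:: 653; 772; 762]; [:: 656; 766; 765]; [:: 669; 769; 749]; [:: 671; 768; 748];
       [:: 672; 764; 751]; [:: 674; 761; 752]; [:: 685; 760; 742]; [:: 692; 759; 736];
       [:: 758; 702; 727]; [:: 757; 705; 725]; [:: 756; 703; 728]; [:: 755; 706; 726];
       [:: 754; 709; 724]; [:: 753; 712; 722]; [:: 750; 717; 720]; [:: 708; 745; 734];
       [:: 710; 744; 733]; [:: 747; 719; 721]; [:: 711; 739; 737]; [:: 746; 718; 723];
       [:: 713; 743; 731]; [:: 714; 738; 735]; [:: 715; 740; 732]; [:: 716; 741; 730]; [:: 729];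
       [:: 73; 83; 87]; [:: 26; 55]; [:: 23; 58]; [:: 37; 44]; [:: 76; 78; 89]; [:: 21; 60];
       [:: 24; 57]; [:: 27]],
   [:: (22, 1); (25, 1); (28, 9); (38, 6); (45, 10); (56, 1); (59, 1); (61, 12); (74, 2);
       (77, 1); (79, 4); (84, 3); (88, 1); (90, 275)]);
  (779, 6, 23,
   [:: [:: 631; 779; 777]; [:: 636; 776; 775]; [:: 638; 778; 771]; [:: 642; 773; 772];
       [:: 643; 774; 770]; [:: 650; 769; 768]; [:: 656; 767; 764]; [:: 659; 766; 762];
       [:: 677; 765; 745]; [:: 682; 763; 742]; [:: 684; 760; 743]; [:: 693; 761; 733];
       [:: 695; 758; 734]; [:: 698; 759; 730]; [:: 757; 702; 728]; [:: 756; 705; 726];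
       [:: 755; 707; 725]; [:: 703; 753; 731]; [:: 754; 709; 724]; [:: 752; 714; 721];
       [:: 706; 746; 735]; [:: 751; 716; 720]; [:: 750; 718; 719]; [:: 708; 741; 738];
       [:: 749; 715; 723]; [:: 748; 717; 722]; [:: 710; 740; 737]; [:: 747; 713; 727];
       [:: 711; 744; 732]; [:: 712; 739; 736]; [:: 729]; [:: 52; 93; 98]; [:: 73; 79; 91];
       [:: 70; 86; 87]; [:: 24; 26; 31]; [:: 34; 47]; [:: 36; 45]; [:: 27]],
   [:: (25, 1); (28, 3); (32, 2); (35, 1); (37, 8); (46, 1); (48, 4); (53, 17); (71, 2); (74, 5);
       (80, 6); (88, 3); (92, 1); (94, 4); (99, 266)]);
  (782, 6, 0,
   [:: [:: 631; 782; 774]; [:: 633; 781; 773]; [:: 634; 778; 775]; [:: 635; 780; 772];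
       [:: 640; 779; 768]; [:: 646; 777; 764]; [:: 662; 776; 749]; [:: 664; 771; 752];
       [:: 668; 769; 750]; [:: 669; 770; 748]; [:: 672; 762; 753]; [:: 677; 767; 743];
       [:: 680; 766; 741]; [:: 682; 765; 740]; [:: 688; 763; 736]; [:: 689; 761; 737];
       [:: 760; 699; 728]; [:: 759; 701; 727]; [:: 758; 703; 726]; [:: 700; 757; 730];
       [:: 756; 707; 724]; [:: 702; 751; 734]; [:: 755; 714; 718]; [:: 754; 710; 723];
       [:: 704; 745; 738]; [:: 708; 744; 735]; [:: 709; 747; 731]; [:: 746; 720; 721];
       [:: 712; 742; 733]; [:: 716; 739; 732]; [:: 729]; [:: 49; 96; 98]; [:: 3; 11; 67];
       [:: 13; 27; 41]; [:: 65; 83; 95]; [:: 2; 22; 57]; [:: 29; 52]; [:: 20; 21; 40];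
       [:: 6; 28; 47]; [:: 60; 89; 94]; [:: 25; 26; 30]; [:: 5; 15; 61]; [:: 1; 9; 17];
       [:: 8; 19]],
   [:: (4, 1); (7, 1); (10, 1); (12, 1); (14, 1); (16, 1); (18, 1); (23, 2); (31, 9); (42, 5);
       (48, 1); (50, 2); (53, 4); (58, 2); (62, 3); (66, 1); (68, 15); (84, 5); (90, 4); (97, 1);
       (99, 266)]);
  (785, 6, 24,
   [:: [:: 622; 785; 780]; [:: 632; 784; 771]; [:: 633; 782; 772]; [:: 634; 783; 770];
       [:: 635; 779; 773]; [:: 640; 781; 766]; [:: 642; 778; 767]; [:: 648; 777; 762];
       [:: 653; 776; 758]; [:: 654; 774; 759]; [:: 656; 775; 756]; [:: 659; 768; 760];
       [:: 666; 769; 752]; [:: 670; 764; 753]; [:: 676; 765; 746]; [:: 763; 701; 723];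
       [:: 761; 702; 724]; [:: 757; 703; 727]; [:: 755; 706; 726]; [:: 754; 705; 728];
       [:: 751; 707; 729]; [:: 750; 712; 725]; [:: 708; 745; 734]; [:: 749; 717; 721];
       [:: 709; 743; 735]; [:: 748; 719; 720]; [:: 710; 744; 733]; [:: 747; 718; 722];
       [:: 711; 739; 737]; [:: 713; 738; 736]; [:: 714; 742; 731]; [:: 715; 740; 732];
       [:: 716; 741; 730]; [:: 75; 81; 87]; [:: 63; 73; 107]; [:: 59; 89; 95]; [:: 70; 76; 97];
       [:: 53; 94; 96]; [:: 26; 27; 28]],
   [:: (25, 1); (29, 24); (54, 5); (60, 3); (64, 6); (71, 2); (74, 1); (77, 4); (82, 5); (88, 1);
       (90, 4); (98, 9); (108, 257)]);
  (788, 6, 21,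
   [:: [:: 612; 788; 787]; [:: 620; 786; 781]; [:: 622; 785; 780]; [:: 625; 784; 778];
       [:: 629; 783; 775]; [:: 639; 782; 766]; [:: 640; 779; 768]; [:: 642; 776; 769];
       [:: 643; 777; 767]; [:: 655; 774; 758]; [:: 659; 773; 755]; [:: 660; 771; 756];
       [:: 671; 772; 744]; [:: 674; 770; 743]; [:: 682; 765; 740]; [:: 684; 764; 739];
       [:: 693; 763; 731]; [:: 695; 762; 730]; [:: 761; 697; 729]; [:: 760; 699; 728];
       [:: 759; 703; 725]; [:: 700; 754; 733]; [:: 757; 706; 724]; [:: 753; 708; 726];
       [:: 752; 714; 721]; [:: 751; 716; 720]; [:: 707; 746; 734]; [:: 750; 718; 719];
       [:: 749; 715; 723]; [:: 709; 742; 736]; [:: 748; 717; 722]; [:: 710; 745; 732];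
       [:: 747; 713; 727]; [:: 711; 741; 735]; [:: 712; 738; 737]; [:: 36; 90; 117];
       [:: 70; 86; 87]; [:: 22; 29; 30]; [:: 26; 55]; [:: 69; 74; 100]; [:: 32; 104; 107];
       [:: 45; 89; 109]; [:: 34; 47]; [:: 23; 58]],
   [:: (24, 2); (27, 2); (31, 1); (33, 1); (35, 1); (37, 8); (46, 1); (48, 7); (56, 2); (59, 10);
       (71, 3); (75, 11); (88, 1); (91, 9); (101, 3); (105, 2); (108, 1); (110, 7); (118, 247)]);
  (791, 6, 18,
   [:: [:: 609; 791; 787]; [:: 610; 789; 788]; [:: 628; 790; 769]; [:: 630; 786; 771];
       [:: 632; 785; 770]; [:: 633; 782; 772]; [:: 636; 784; 767]; [:: 638; 783; 766];
       [:: 640; 774; 773]; [:: 642; 781; 764]; [:: 643; 779; 765]; [:: 645; 780; 762];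
       [:: 647; 777; 763]; [:: 656; 778; 753]; [:: 659; 776; 752]; [:: 661; 775; 751];
       [:: 668; 761; 758]; [:: 669; 768; 750]; [:: 679; 760; 748]; [:: 681; 759; 747];
       [:: 698; 757; 732]; [:: 700; 756; 731]; [:: 702; 755; 730]; [:: 754; 708; 725];
       [:: 749; 711; 727]; [:: 746; 715; 726]; [:: 712; 741; 734]; [:: 745; 719; 723];
       [:: 713; 739; 735]; [:: 744; 721; 722]; [:: 714; 737; 736]; [:: 743; 720; 724];
       [:: 742; 717; 728]; [:: 716; 738; 733]; [:: 740; 718; 729]; [:: 68; 84; 91];
       [:: 70; 86; 87]; [:: 61; 89; 93]; [:: 48; 96; 99]; [:: 27; 97; 119]; [:: 21; 29; 31];
       [:: 60; 82; 101]; [:: 50; 73; 120]],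
   [:: (19, 2); (22, 5); (28, 1); (30, 1); (32, 16); (49, 1); (51, 9); (62, 6); (69, 1); (71, 2);
       (74, 8); (83, 1); (85, 1); (88, 1); (90, 1); (92, 1); (94, 2); (98, 1); (100, 1);
       (102, 17); (121, 244)]);
  (794, 6, 15,
   [:: [:: 601; 794; 792]; [:: 605; 793; 789]; [:: 606; 791; 790]; [:: 617; 788; 782];
       [:: 622; 787; 778]; [:: 624; 786; 777]; [:: 628; 785; 774]; [:: 638; 784; 765];
       [:: 639; 781; 767]; [:: 642; 783; 762]; [:: 644; 780; 763]; [:: 645; 776; 766];
       [:: 646; 773; 768]; [:: 648; 779; 760]; [:: 654; 775; 758]; [:: 655; 771; 761];
       [:: 662; 772; 753]; [:: 663; 769; 755]; [:: 665; 770; 752]; [:: 675; 764; 748];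
       [:: 676; 757; 754]; [:: 688; 759; 740]; [:: 693; 756; 738]; [:: 698; 750; 739];
       [:: 706; 751; 730]; [:: 707; 749; 731]; [:: 747; 711; 729]; [:: 746; 714; 727];
       [:: 745; 716; 726]; [:: 744; 715; 728]; [:: 743; 720; 724]; [:: 742; 722; 723];
       [:: 741; 721; 725]; [:: 717; 737; 733]; [:: 718; 735; 734]; [:: 719; 736; 732];
       [:: 75; 81; 87]; [:: 41; 90; 112]; [:: 53; 83; 107]; [:: 67; 85; 91]; [:: 31; 84; 128];
       [:: 54; 66; 123]; [:: 18; 101; 124]; [:: 22; 23; 36]; [:: 64; 74; 105]],
   [:: (16, 2); (19, 3); (24, 7); (32, 4); (37, 4); (42, 11); (55, 9); (65, 1); (68, 6); (76, 5);
       (82, 1); (86, 1); (88, 2); (92, 9); (102, 3); (106, 1); (108, 4); (113, 10); (125, 3);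
       (129, 236)]);
  (797, 6, 12,
   [:: [:: 599; 797; 791]; [:: 605; 796; 786]; [:: 609; 795; 783]; [:: 610; 793; 784];
       [:: 612; 794; 781]; [:: 613; 792; 782]; [:: 621; 790; 776]; [:: 623; 789; 775];
       [:: 624; 785; 778]; [:: 627; 788; 772]; [:: 632; 787; 768]; [:: 635; 779; 773];
       [:: 640; 780; 767]; [:: 643; 774; 770]; [:: 652; 777; 758]; [:: 658; 769; 760];
       [:: 664; 771; 752]; [:: 665; 766; 756]; [:: 668; 765; 754]; [:: 675; 764; 748];
       [:: 677; 763; 747]; [:: 678; 759; 750]; [:: 680; 762; 745]; [:: 682; 761; 744];
       [:: 687; 757; 743]; [:: 696; 755; 736]; [:: 703; 753; 731]; [:: 705; 749; 733];
       [:: 751; 709; 727]; [:: 710; 742; 735]; [:: 746; 717; 724]; [:: 741; 718; 728];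
       [:: 740; 722; 725]; [:: 739; 719; 729]; [:: 738; 723; 726]; [:: 720; 737; 730];
       [:: 721; 734; 732]; [:: 51; 86; 106]; [:: 33; 94; 116]; [:: 24; 102; 117];
       [:: 49; 89; 105]; [:: 52; 61; 130]; [:: 26; 97; 120]; [:: 47; 77; 119]; [:: 54; 65; 124];
       [:: 64; 71; 108]; [:: 19; 20; 42]],
   [:: (13, 6); (21, 3); (25, 1); (27, 6); (34, 8); (43, 4); (48, 1); (50, 1); (53, 1); (55, 6);
       (62, 2); (66, 5); (72, 5); (78, 8); (87, 2); (90, 4); (95, 2); (98, 4); (103, 2);
       (107, 1); (109, 7); (118, 1); (121, 3); (125, 5); (131, 234)]);
  (800, 6, 9,
   [:: [:: 595; 800; 792]; [:: 597; 799; 791]; [:: 600; 798; 789]; [:: 602; 797; 788];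
       [:: 603; 794; 790]; [:: 607; 796; 784]; [:: 611; 795; 781]; [:: 621; 793; 773];
       [:: 631; 787; 769]; [:: 633; 786; 768]; [:: 635; 785; 767]; [:: 638; 783; 766];
       [:: 639; 778; 770]; [:: 640; 782; 765]; [:: 644; 780; 763]; [:: 648; 779; 760];
       [:: 649; 777; 761]; [:: 654; 776; 757]; [:: 655; 774; 758]; [:: 660; 775; 752];
       [:: 669; 772; 746]; [:: 672; 771; 744]; [:: 676; 764; 747]; [:: 679; 759; 749];
       [:: 684; 762; 741]; [:: 687; 755; 745]; [:: 693; 756; 738]; [:: 694; 754; 739];
       [:: 697; 753; 737]; [:: 701; 751; 735]; [:: 704; 750; 733]; [:: 748; 713; 726];
       [:: 743; 715; 729]; [:: 742; 720; 725]; [:: 740; 723; 724]; [:: 721; 736; 730];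
       [:: 722; 734; 731]; [:: 732; 727; 728]; [:: 57; 60; 126]; [:: 28; 81; 134];
       [:: 50; 75; 118]; [:: 25; 91; 127]; [:: 36; 85; 122]; [:: 45; 90; 108]; [:: 16; 98; 129];
       [:: 74; 80; 89]; [:: 53; 94; 96]; [:: 42; 69; 132]; [:: 14; 32; 35]],
   [:: (10, 4); (15, 1); (17, 8); (26, 2); (29, 3); (33, 2); (37, 5); (43, 2); (46, 4); (51, 2);
       (54, 3); (58, 2); (61, 8); (70, 4); (76, 4); (82, 3); (86, 3); (92, 2); (95, 1); (97, 1);
       (99, 9); (109, 9); (119, 3); (123, 3); (128, 1); (130, 2); (133, 1); (135, 230)]);
  (803, 6, 6,
   [:: [:: 586; 803; 798]; [:: 588; 802; 797]; [:: 592; 801; 794]; [:: 599; 800; 788];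
       [:: 602; 799; 786]; [:: 608; 796; 783]; [:: 619; 795; 773]; [:: 621; 792; 774];
       [:: 626; 793; 768]; [:: 629; 791; 767]; [:: 633; 790; 764]; [:: 634; 787; 766];
       [:: 640; 789; 758]; [:: 641; 785; 761]; [:: 645; 782; 760]; [:: 646; 784; 757];
       [:: 647; 781; 759]; [:: 653; 780; 754]; [:: 654; 778; 755]; [:: 664; 779; 744];
       [:: 668; 777; 742]; [:: 670; 776; 741]; [:: 671; 771; 745]; [:: 680; 775; 732];
       [:: 681; 772; 734]; [:: 686; 770; 731]; [:: 769; 689; 729]; [:: 690; 762; 735];
       [:: 692; 765; 730]; [:: 763; 697; 727]; [:: 699; 752; 736]; [:: 756; 705; 726];
       [:: 702; 748; 737]; [:: 753; 711; 723]; [:: 751; 714; 722]; [:: 750; 712; 725];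
       [:: 749; 718; 720]; [:: 709; 740; 738]; [:: 747; 719; 721]; [:: 746; 717; 724];
       [:: 743; 716; 728]; [:: 715; 739; 733]; [:: 7; 9; 11]; [:: 24; 76; 143]; [:: 58; 75; 110];
       [:: 37; 65; 141]; [:: 39; 83; 121]; [:: 32; 84; 127]; [:: 40; 95; 108]; [:: 17; 89; 137];
       [:: 59; 88; 96]; [:: 12; 20; 49]; [:: 15; 18; 48]; [:: 61; 82; 100]; [:: 10; 103; 130];
       [:: 8; 30; 43]; [:: 13; 14]; [:: 27]],
   [:: (16, 1); (19, 1); (21, 3); (25, 2); (28, 2); (31, 1); (33, 4); (38, 1); (41, 2); (44, 4);
       (50, 8); (60, 1); (62, 3); (66, 9); (77, 5); (85, 3); (90, 5); (97, 3); (101, 2);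
       (104, 4); (109, 1); (111, 10); (122, 5); (128, 2); (131, 6); (138, 3); (142, 1);
       (144, 221)]);
  (806, 6, 3,
   [:: [:: 578; 806; 803]; [:: 584; 805; 798]; [:: 585; 802; 800]; [:: 593; 804; 790];
       [:: 594; 801; 792]; [:: 602; 799; 786]; [:: 618; 797; 772]; [:: 619; 795; 773];
       [:: 622; 796; 769]; [:: 628; 794; 765]; [:: 630; 793; 764]; [:: 631; 789; 767];
       [:: 632; 787; 768]; [:: 637; 791; 759]; [:: 638; 788; 761]; [:: 639; 785; 763];
       [:: 640; 781; 766]; [:: 641; 784; 762]; [:: 643; 774; 770]; [:: 647; 783; 757];
       [:: 651; 782; 754]; [:: 652; 780; 755]; [:: 653; 778; 756]; [:: 658; 779; 750];
       [:: 660; 776; 751]; [:: 661; 777; 749]; [:: 663; 771; 753]; [:: 673; 775; 739];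
       [:: 686; 760; 741]; [:: 695; 758; 734]; [:: 697; 752; 738]; [:: 702; 745; 740];
       [:: 703; 748; 736]; [:: 704; 746; 737]; [:: 705; 747; 735]; [:: 710; 744; 733];
       [:: 743; 715; 729]; [:: 742; 722; 723]; [:: 732; 727; 728]; [:: 726; 731; 730];
       [:: 43; 56; 144]; [:: 71; 82; 90]; [:: 24; 25; 32]; [:: 7; 101; 135]; [:: 14; 78; 151];
       [:: 34; 98; 111]; [:: 66; 86; 91]; [:: 26; 107; 110]; [:: 19; 88; 136]; [:: 6; 92; 145];
       [:: 69; 77; 97]; [:: 68; 76; 99]; [:: 27; 89; 127]],
   [:: (4, 2); (8, 6); (15, 4); (20, 4); (28, 4); (33, 1); (35, 8); (44, 12); (57, 9); (67, 1);
       (70, 1); (72, 4); (79, 3); (83, 3); (87, 1); (93, 4); (100, 1); (102, 5); (108, 2);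
       (112, 15); (128, 7); (137, 7); (146, 5); (152, 213)]);
  (809, 6, 0,
   [:: [:: 571; 809; 807]; [:: 579; 808; 800]; [:: 581; 805; 801]; [:: 587; 806; 794];
       [:: 598; 804; 785]; [:: 606; 803; 778]; [:: 613; 802; 772]; [:: 614; 799; 774];
       [:: 615; 797; 775]; [:: 619; 798; 770]; [:: 621; 795; 771]; [:: 630; 796; 761];
       [:: 631; 793; 763]; [:: 632; 791; 764]; [:: 637; 792; 758]; [:: 646; 790; 751];
       [:: 648; 789; 750]; [:: 651; 788; 748]; [:: 652; 786; 749]; [:: 653; 787; 747];
       [:: 656; 779; 752]; [:: 657; 784; 746]; [:: 661; 783; 743]; [:: 664; 782; 741];
       [:: 666; 781; 740]; [:: 668; 780; 739]; [:: 669; 776; 742]; [:: 671; 762; 754];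
       [:: 675; 777; 735]; [:: 681; 773; 733]; [:: 683; 768; 736]; [:: 685; 765; 737];
       [:: 688; 769; 730]; [:: 689; 767; 731]; [:: 766; 696; 725]; [:: 760; 701; 726];
       [:: 759; 711; 717]; [:: 757; 714; 716]; [:: 756; 708; 723]; [:: 755; 710; 722];
       [:: 753; 707; 727]; [:: 705; 744; 738]; [:: 745; 713; 729]; [:: 721; 734; 732];
       [:: 7; 78; 158]; [:: 28; 92; 123]; [:: 58; 77; 108]; [:: 18; 110; 115]; [:: 16; 65];
       [:: 63; 83; 97]; [:: 54; 73; 116]; [:: 12; 81; 150]; [:: 40; 72; 131]; [:: 41; 60; 142];
       [:: 19; 76; 148]; [:: 33; 48]; [:: 46; 98; 99]; [:: 61; 68; 114]; [:: 15; 22; 44];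
       [:: 3; 24]; [:: 2; 4; 21]; [:: 6; 8; 13]],
   [:: (1, 1); (5, 1); (9, 3); (14, 1); (17, 1); (20, 1); (23, 1); (25, 3); (29, 4); (34, 6);
       (42, 2); (45, 1); (47, 1); (49, 5); (55, 3); (59, 1); (62, 1); (64, 1); (66, 2); (69, 3);
       (74, 2); (79, 2); (82, 1); (84, 8); (93, 4); (100, 8); (109, 1); (111, 3); (117, 6);
       (124, 7); (132, 10); (143, 5); (149, 1); (151, 7); (159, 206)]);
  (812, 6, 24,
   [:: [:: 570; 812; 805]; [:: 577; 811; 799]; [:: 581; 810; 796]; [:: 601; 809; 777];
       [:: 605; 808; 774]; [:: 608; 807; 772]; [:: 614; 806; 767]; [:: 625; 804; 758];
       [:: 627; 803; 757]; [:: 628; 800; 759]; [:: 629; 802; 756]; [:: 631; 801; 755];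
       [:: 634; 793; 760]; [:: 638; 798; 751]; [:: 643; 797; 747]; [:: 648; 795; 744];
       [:: 649; 792; 746]; [:: 650; 794; 743]; [:: 651; 791; 745]; [:: 652; 787; 748];
       [:: 653; 785; 749]; [:: 657; 790; 740]; [:: 660; 789; 738]; [:: 663; 788; 736];
       [:: 665; 783; 739]; [:: 668; 786; 733]; [:: 784; 676; 727]; [:: 782; 677; 728];
       [:: 781; 682; 724]; [:: 780; 684; 723]; [:: 678; 779; 730]; [:: 778; 688; 721];
       [:: 776; 685; 726]; [:: 775; 693; 719]; [:: 773; 696; 718]; [:: 686; 770; 731];
       [:: 771; 691; 725]; [:: 769; 698; 720]; [:: 768; 705; 714]; [:: 766; 706; 715];
       [:: 765; 710; 712]; [:: 764; 707; 716]; [:: 763; 711; 713]; [:: 695; 750; 742];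
       [:: 762; 708; 717]; [:: 761; 704; 722]; [:: 699; 754; 734]; [:: 700; 752; 735];
       [:: 702; 753; 732]; [:: 709; 741; 737]; [:: 729]; [:: 25; 66; 152]; [:: 78; 79; 86];
       [:: 41; 100; 102]; [:: 44; 95; 104]; [:: 31; 64; 148]; [:: 53; 69; 121]; [:: 61; 81; 101];
       [:: 72; 80; 91]; [:: 33; 51; 159]; [:: 36; 45]; [:: 30; 98; 115]; [:: 38; 77; 128];
       [:: 43; 76; 124]; [:: 29; 52]; [:: 27]; [:: 34; 47]],
   [:: (26, 1); (28, 1); (32, 1); (35, 1); (37, 1); (39, 2); (42, 1); (46, 1); (48, 3); (54, 7);
       (62, 2); (65, 1); (67, 2); (70, 2); (73, 3); (82, 4); (87, 4); (92, 3); (96, 2); (99, 1);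
       (103, 1); (105, 10); (116, 5); (122, 2); (125, 3); (129, 19); (149, 3); (153, 6);
       (160, 205)]);
  (815, 6, 21,
   [:: [:: 564; 815; 808]; [:: 577; 814; 796]; [:: 578; 812; 797]; [:: 583; 813; 791];
       [:: 592; 811; 784]; [:: 598; 810; 779]; [:: 604; 809; 774]; [:: 612; 807; 768];
       [:: 617; 806; 764]; [:: 618; 804; 765]; [:: 624; 805; 758]; [:: 627; 803; 757];
       [:: 629; 802; 756]; [:: 634; 801; 752]; [:: 636; 800; 751]; [:: 641; 799; 747];
       [:: 642; 795; 750]; [:: 643; 798; 746]; [:: 646; 793; 748]; [:: 649; 794; 744];
       [:: 650; 792; 745]; [:: 651; 787; 749]; [:: 654; 790; 743]; [:: 656; 789; 742];
       [:: 658; 788; 741]; [:: 662; 786; 739]; [:: 663; 771; 753]; [:: 669; 785; 733];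
       [:: 670; 783; 734]; [:: 673; 782; 732]; [:: 675; 781; 731]; [:: 676; 776; 735];
       [:: 780; 678; 729]; [:: 679; 778; 730]; [:: 777; 684; 726]; [:: 775; 690; 722];
       [:: 773; 691; 723]; [:: 772; 698; 717]; [:: 770; 692; 725]; [:: 769; 702; 716];
       [:: 767; 693; 727]; [:: 766; 701; 720]; [:: 763; 705; 719]; [:: 762; 710; 715];
       [:: 761; 708; 718]; [:: 760; 713; 714]; [:: 759; 707; 721]; [:: 755; 704; 728];
       [:: 754; 709; 724]; [:: 711; 740; 736]; [:: 712; 738; 737]; [:: 51; 67; 125];
       [:: 75; 80; 88]; [:: 38; 54; 151]; [:: 36; 102; 105]; [:: 37; 95; 111]; [:: 71; 79; 93];
       [:: 39; 87; 117]; [:: 60; 83; 100]; [:: 22; 56; 165]; [:: 25; 66; 152]; [:: 45; 86; 112];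
       [:: 53; 59; 131]; [:: 24; 73; 146]; [:: 28; 78; 137]; [:: 31; 50]; [:: 27]],
   [:: (23, 1); (26, 1); (29, 2); (32, 4); (40, 5); (46, 4); (52, 1); (55, 1); (57, 2); (61, 5);
       (68, 3); (72, 1); (74, 1); (76, 2); (81, 2); (84, 2); (89, 4); (94, 1); (96, 4); (101, 1);
       (103, 2); (106, 5); (113, 4); (118, 7); (126, 5); (132, 5); (138, 8); (147, 4); (153, 12);
       (166, 199)]);
  (818, 6, 18,
   [:: [:: 561; 818; 808]; [:: 568; 817; 802]; [:: 575; 816; 796]; [:: 581; 815; 791];
       [:: 585; 814; 788]; [:: 590; 813; 784]; [:: 592; 812; 783]; [:: 596; 811; 780];
       [:: 598; 810; 779]; [:: 600; 809; 778]; [:: 601; 805; 781]; [:: 620; 807; 760];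
       [:: 624; 806; 757]; [:: 631; 804; 752]; [:: 632; 801; 754]; [:: 633; 803; 751];
       [:: 637; 800; 750]; [:: 642; 799; 746]; [:: 646; 798; 743]; [:: 647; 795; 745];
       [:: 648; 797; 742]; [:: 649; 794; 744]; [:: 650; 790; 747]; [:: 651; 787; 749];
       [:: 652; 782; 753]; [:: 654; 793; 740]; [:: 656; 792; 739]; [:: 661; 789; 737];
       [:: 662; 777; 748]; [:: 663; 786; 738]; [:: 666; 785; 736]; [:: 669; 763; 755];
       [:: 670; 776; 741]; [:: 672; 759; 756]; [:: 679; 775; 733]; [:: 774; 687; 726];
       [:: 773; 691; 723]; [:: 772; 688; 727]; [:: 771; 698; 718]; [:: 770; 693; 724];
       [:: 769; 702; 716]; [:: 768; 704; 715]; [:: 767; 707; 713]; [:: 766; 710; 711];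
       [:: 765; 703; 719]; [:: 764; 706; 717]; [:: 762; 700; 725]; [:: 761; 712; 714];
       [:: 758; 708; 721]; [:: 720; 735; 732]; [:: 722; 734; 731]; [:: 730; 728; 729];
       [:: 29; 77; 137]; [:: 75; 168]; [:: 38; 57; 148]; [:: 50; 60; 133]; [:: 59; 79; 105];
       [:: 42; 73; 128]; [:: 23; 66; 154]; [:: 22; 92; 129]; [:: 82; 161]; [:: 26; 78; 139];
       [:: 25; 87; 131]; [:: 67; 80; 96]; [:: 31; 68; 144]; [:: 63; 83; 97]; [:: 36; 98; 109];
       [:: 19; 21; 41]; [:: 81]; [:: 27]],
   [:: (20, 1); (24, 1); (28, 1); (30, 1); (32, 4); (37, 1); (39, 2); (43, 7); (51, 6); (58, 1);
       (61, 2); (64, 2); (69, 4); (74, 1); (76, 1); (84, 3); (88, 4); (93, 3); (99, 6); (106, 3);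
       (110, 18); (130, 1); (132, 1); (134, 3); (138, 1); (140, 4); (145, 3); (149, 5); (155, 6);
       (162, 6); (169, 196)]);
  (821, 6, 15,
   [:: [:: 562; 821; 804]; [:: 566; 820; 801]; [:: 567; 818; 802]; [:: 575; 819; 793];
       [:: 579; 817; 791]; [:: 591; 816; 780]; [:: 593; 815; 779]; [:: 597; 814; 776];
       [:: 606; 813; 768]; [:: 607; 811; 769]; [:: 609; 812; 766]; [:: 611; 809; 767];
       [:: 615; 810; 762]; [:: 621; 808; 758]; [:: 622; 806; 759]; [:: 623; 807; 757];
       [:: 627; 805; 755]; [:: 630; 803; 754]; [:: 635; 800; 752]; [:: 636; 798; 753];
       [:: 639; 799; 749]; [:: 642; 797; 748]; [:: 646; 796; 745]; [:: 651; 795; 741];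
       [:: 652; 792; 743]; [:: 656; 794; 737]; [:: 660; 789; 738]; [:: 665; 790; 732];
       [:: 666; 788; 733]; [:: 667; 786; 734]; [:: 668; 784; 735]; [:: 669; 787; 731];
       [:: 670; 781; 736]; [:: 785; 674; 728]; [:: 783; 678; 726]; [:: 675; 782; 730];
       [:: 676; 772; 739]; [:: 679; 764; 744]; [:: 778; 685; 724]; [:: 777; 683; 727];
       [:: 682; 765; 740]; [:: 775; 687; 725]; [:: 774; 692; 721]; [:: 773; 699; 715];
       [:: 771; 693; 723]; [:: 770; 701; 716]; [:: 691; 750; 746]; [:: 763; 702; 722];
       [:: 761; 712; 714]; [:: 760; 707; 720]; [:: 698; 747; 742]; [:: 756; 713; 718];
       [:: 751; 717; 719]; [:: 729]; [:: 47; 94; 102]; [:: 28; 93; 122]; [:: 60; 63; 120];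
       [:: 50; 55; 138]; [:: 17; 108; 118]; [:: 37; 44; 162]; [:: 46; 61; 136]; [:: 38; 99; 106];
       [:: 73; 83; 87]; [:: 30; 90; 123]; [:: 51; 78; 114]; [:: 36; 53; 154]; [:: 22; 54; 167];
       [:: 59; 77; 107]; [:: 42; 69; 132]; [:: 31; 62; 150]; [:: 16; 64; 163]; [:: 27]],
   [:: (18, 4); (23, 4); (29, 1); (32, 4); (39, 3); (43, 1); (45, 1); (48, 2); (52, 1); (56, 3);
       (65, 4); (70, 3); (74, 3); (79, 4); (84, 3); (88, 2); (91, 2); (95, 4); (100, 2);
       (103, 3); (109, 5); (115, 3); (119, 1); (121, 1); (124, 8); (133, 3); (137, 1); (139, 11);
       (151, 3); (155, 7); (164, 3); (168, 197)]);
  (824, 6, 14,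
   [:: [:: 542; 824; 821]; [:: 546; 823; 818]; [:: 551; 822; 814]; [:: 555; 820; 812];
       [:: 567; 819; 801]; [:: 572; 817; 798]; [:: 580; 816; 791]; [:: 594; 815; 778];
       [:: 598; 813; 776]; [:: 603; 811; 773]; [:: 606; 810; 771]; [:: 612; 809; 766];
       [:: 613; 807; 767]; [:: 616; 808; 763]; [:: 618; 805; 764]; [:: 619; 806; 762];
       [:: 622; 804; 761]; [:: 623; 799; 765]; [:: 628; 803; 756]; [:: 632; 802; 753];
       [:: 634; 796; 757]; [:: 636; 800; 751]; [:: 640; 797; 750]; [:: 642; 793; 752];
       [:: 646; 795; 746]; [:: 649; 794; 744]; [:: 655; 792; 740]; [:: 658; 790; 739];
       [:: 668; 789; 730]; [:: 669; 787; 731]; [:: 788; 672; 727]; [:: 786; 673; 728];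
       [:: 785; 676; 726]; [:: 784; 678; 725]; [:: 783; 680; 724]; [:: 782; 684; 721];
       [:: 781; 686; 720]; [:: 677; 777; 733]; [:: 780; 685; 722]; [:: 779; 689; 719];
       [:: 679; 774; 734]; [:: 775; 694; 718]; [:: 772; 692; 723]; [:: 687; 768; 732];
       [:: 770; 701; 716]; [:: 688; 758; 741]; [:: 769; 704; 714]; [:: 690; 749; 748];
       [:: 695; 754; 738]; [:: 697; 755; 735]; [:: 760; 712; 715]; [:: 759; 711; 717];
       [:: 699; 745; 743]; [:: 703; 747; 737]; [:: 709; 742; 736]; [:: 729]; [:: 18; 26; 37];
       [:: 57; 89; 97]; [:: 45; 87; 111]; [:: 44; 50; 149]; [:: 53; 83; 107]; [:: 20; 106; 117];
       [:: 17; 52; 174]; [:: 28; 80; 135]; [:: 51; 61; 131]; [:: 60; 183]; [:: 34; 93; 116];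
       [:: 25; 40; 178]; [:: 49; 71; 123]; [:: 39; 42; 162]; [:: 35; 95; 113]; [:: 30; 56; 157];
       [:: 43; 74; 126]; [:: 15; 41; 187]; [:: 32; 101; 110]],
   [:: (16, 1); (19, 1); (21, 4); (27, 1); (29, 1); (31, 1); (33, 1); (36, 1); (38, 1); (46, 3);
       (54, 2); (58, 2); (62, 9); (72, 2); (75, 5); (81, 2); (84, 3); (88, 1); (90, 3); (94, 1);
       (96, 1); (98, 3); (102, 4); (108, 2); (112, 1); (114, 2); (118, 5); (124, 2); (127, 4);
       (132, 3); (136, 13); (150, 7); (158, 4); (163, 11); (175, 3); (179, 4); (184, 3);
       (188, 177)]);
  (827, 6, 17,
   [:: [:: 547; 827; 813]; [:: 548; 825; 814]; [:: 553; 826; 808]; [:: 554; 824; 809];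
       [:: 562; 823; 802]; [:: 563; 821; 803]; [:: 574; 822; 791]; [:: 576; 819; 792];
       [:: 578; 820; 789]; [:: 581; 818; 788]; [:: 584; 817; 786]; [:: 589; 816; 782];
       [:: 601; 815; 771]; [:: 604; 811; 772]; [:: 606; 812; 769]; [:: 610; 810; 767];
       [:: 611; 806; 770]; [:: 616; 807; 764]; [:: 620; 805; 762]; [:: 622; 804; 761];
       [:: 629; 801; 757]; [:: 630; 799; 758]; [:: 634; 800; 753]; [:: 639; 798; 750];
       [:: 640; 796; 751]; [:: 647; 797; 743]; [:: 648; 795; 744]; [:: 657; 794; 736];
       [:: 660; 793; 734]; [:: 661; 787; 739]; [:: 790; 673; 724]; [:: 785; 674; 728];
       [:: 784; 676; 727]; [:: 783; 679; 725]; [:: 781; 680; 726]; [:: 780; 684; 723];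
       [:: 779; 686; 722]; [:: 778; 690; 719]; [:: 777; 692; 718]; [:: 776; 691; 720];
       [:: 682; 775; 730]; [:: 774; 696; 717]; [:: 773; 693; 721]; [:: 685; 756; 746];
       [:: 687; 763; 737]; [:: 768; 705; 714]; [:: 766; 708; 713]; [:: 765; 706; 716];
       [:: 694; 755; 738]; [:: 695; 759; 733]; [:: 760; 712; 715]; [:: 698; 749; 740];
       [:: 699; 747; 741]; [:: 700; 745; 742]; [:: 702; 754; 731]; [:: 703; 752; 732];
       [:: 704; 748; 735]; [:: 729]; [:: 42; 82; 119]; [:: 44; 99; 100]; [:: 38; 50; 155];
       [:: 27; 49; 167]; [:: 25; 95; 123]; [:: 118; 125]; [:: 21; 109; 113]; [:: 26; 36; 181];
       [:: 47; 89; 107]; [:: 23; 45; 175]; [:: 30; 31; 182]; [:: 29; 69; 145]; [:: 35; 68; 140];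
       [:: 33; 34; 176]; [:: 90; 153]; [:: 37; 55; 151]; [:: 24; 53; 166]; [:: 39; 56; 148];
       [:: 43; 72; 128]; [:: 81]],
   [:: (18, 3); (22, 1); (28, 1); (32, 1); (40, 2); (46, 1); (48, 1); (51, 2); (54, 1); (57, 11);
       (70, 2); (73, 8); (83, 6); (91, 4); (96, 3); (101, 6); (108, 1); (110, 3); (114, 4);
       (120, 3); (124, 1); (126, 2); (129, 11); (141, 4); (146, 2); (149, 2); (152, 1); (154, 1);
       (156, 10); (168, 7); (177, 4); (183, 182)]);
  (830, 6, 20,
   [:: [:: 544; 830; 813]; [:: 553; 829; 805]; [:: 559; 828; 800]; [:: 562; 827; 798];
       [:: 569; 826; 792]; [:: 577; 825; 785]; [:: 583; 824; 780]; [:: 593; 823; 771];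
       [:: 598; 822; 767]; [:: 601; 821; 765]; [:: 602; 819; 766]; [:: 603; 820; 764];
       [:: 604; 815; 768]; [:: 605; 812; 770]; [:: 613; 818; 756]; [:: 618; 817; 752];
       [:: 619; 814; 754]; [:: 620; 816; 751]; [:: 623; 811; 753]; [:: 624; 808; 755];
       [:: 628; 810; 749]; [:: 631; 809; 747]; [:: 632; 807; 748]; [:: 633; 804; 750];
       [:: 637; 806; 744]; [:: 641; 803; 743]; [:: 645; 802; 740]; [:: 647; 801; 739];
       [:: 648; 797; 742]; [:: 653; 799; 735]; [:: 655; 796; 736]; [:: 658; 795; 734];
       [:: 659; 791; 737]; [:: 794; 666; 727]; [:: 664; 793; 730]; [:: 790; 672; 725];
       [:: 789; 674; 724]; [:: 788; 677; 722]; [:: 787; 679; 721]; [:: 786; 681; 720];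
       [:: 784; 680; 723]; [:: 783; 685; 719]; [:: 782; 687; 718]; [:: 781; 691; 715];
       [:: 779; 682; 726]; [:: 778; 693; 716]; [:: 777; 696; 714]; [:: 776; 700; 711];
       [:: 775; 702; 710]; [:: 683; 758; 746]; [:: 774; 704; 709]; [:: 773; 706; 708];
       [:: 772; 703; 712]; [:: 688; 761; 738]; [:: 769; 705; 713]; [:: 694; 762; 731];
       [:: 763; 707; 717]; [:: 695; 759; 733]; [:: 760; 699; 728]; [:: 698; 757; 732];
       [:: 701; 745; 741]; [:: 729]; [:: 63; 71; 109]; [:: 22; 97; 124]; [:: 57; 81; 105];
       [:: 36; 76; 131]; [:: 46; 70; 127]; [:: 52; 65; 126]; [:: 50; 92; 101]; [:: 25; 82; 136];
       [:: 26; 106; 111]; [:: 21; 55; 167]; [:: 34; 84; 125]; [:: 28; 30; 185]; [:: 29; 38; 176];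
       [:: 31; 96; 116]; [:: 27; 88; 128]; [:: 23; 74; 146]; [:: 41; 42; 160]; [:: 35; 98; 110];
       [:: 24; 49; 170]; [:: 44; 47; 152]; [:: 33; 48]],
   [:: (32, 1); (37, 1); (39, 2); (43, 1); (45, 1); (51, 1); (53, 2); (56, 1); (58, 5); (64, 1);
       (66, 4); (72, 2); (75, 1); (77, 4); (83, 1); (85, 3); (89, 3); (93, 3); (99, 2); (102, 3);
       (107, 2); (112, 4); (117, 7); (129, 2); (132, 4); (137, 9); (147, 5); (153, 7); (161, 6);
       (168, 2); (171, 5); (177, 8); (186, 179)]);
  (833, 6, 3,
   [:: [:: 524; 833; 830]; [:: 528; 832; 827]; [:: 535; 831; 821]; [:: 544; 829; 814];
       [:: 549; 828; 810]; [:: 553; 826; 808]; [:: 576; 825; 786]; [:: 582; 824; 781];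
       [:: 589; 823; 775]; [:: 591; 822; 774]; [:: 592; 819; 776]; [:: 598; 820; 769];
       [:: 601; 818; 768]; [:: 602; 815; 770]; [:: 603; 817; 767]; [:: 605; 816; 766];
       [:: 606; 809; 772]; [:: 609; 813; 765]; [:: 612; 812; 763]; [:: 615; 811; 761];
       [:: 617; 806; 764]; [:: 628; 807; 752]; [:: 630; 804; 753]; [:: 633; 805; 749];
       [:: 635; 802; 750]; [:: 641; 803; 743]; [:: 642; 801; 744]; [:: 645; 800; 742];
       [:: 649; 799; 739]; [:: 650; 797; 740]; [:: 651; 798; 738]; [:: 652; 794; 741];
       [:: 653; 789; 745]; [:: 660; 796; 731]; [:: 661; 793; 733]; [:: 795; 664; 728];
       [:: 792; 671; 724]; [:: 791; 673; 723]; [:: 790; 672; 725]; [:: 788; 679; 720];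
       [:: 787; 674; 726]; [:: 785; 685; 717]; [:: 784; 681; 722]; [:: 783; 686; 718];
       [:: 782; 692; 713]; [:: 780; 695; 712]; [:: 678; 758; 751]; [:: 779; 699; 709];
       [:: 778; 698; 711]; [:: 777; 702; 708]; [:: 683; 757; 747]; [:: 773; 704; 710];
       [:: 771; 689; 727]; [:: 687; 754; 746]; [:: 690; 760; 737]; [:: 693; 762; 732];
       [:: 694; 759; 734]; [:: 697; 755; 735]; [:: 701; 756; 730]; [:: 703; 748; 736]; [:: 729];
       [:: 18; 88; 137]; [:: 65; 84; 94]; [:: 58; 185]; [:: 51; 68; 124]; [:: 12; 26; 205];
       [:: 39; 57; 147]; [:: 42; 78; 123]; [:: 31; 50]; [:: 48; 55; 140]; [:: 5; 37; 201];
       [:: 4; 112; 127]; [:: 25; 101; 117]; [:: 36; 79; 128]; [:: 19; 28; 34]; [:: 40; 77; 126];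
       [:: 16; 96; 131]; [:: 20; 43; 180]; [:: 6; 99; 138]; [:: 76; 80; 87]; [:: 7; 30; 44];
       [:: 21; 69; 153]; [:: 11; 56; 176]; [:: 17; 32; 194]; [:: 9; 114; 120]; [:: 27];
       [:: 35; 46]],
   [:: (8, 1); (10, 1); (13, 3); (22, 3); (29, 1); (33, 1); (38, 1); (41, 1); (45, 1); (47, 1);
       (49, 1); (52, 3); (59, 6); (66, 2); (70, 6); (81, 3); (85, 2); (89, 5); (95, 1); (97, 2);
       (100, 1); (102, 10); (113, 1); (115, 2); (118, 2); (121, 2); (125, 1); (129, 2); (132, 5);
       (139, 1); (141, 6); (148, 5); (154, 22); (177, 3); (181, 4); (186, 8); (195, 6); (202, 3);
       (206, 159)]);
  (836, 6, 26,
   [:: [:: 538; 836; 813]; [:: 550; 835; 802]; [:: 563; 834; 790]; [:: 570; 833; 784];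
       [:: 590; 832; 765]; [:: 591; 830; 766]; [:: 592; 831; 764]; [:: 593; 827; 767];
       [:: 602; 829; 756]; [:: 604; 828; 755]; [:: 606; 824; 757]; [:: 607; 826; 754];
       [:: 608; 821; 758]; [:: 611; 825; 751]; [:: 613; 822; 752]; [:: 616; 823; 748];
       [:: 619; 819; 749]; [:: 621; 820; 746]; [:: 622; 818; 747]; [:: 623; 814; 750];
       [:: 625; 817; 745]; [:: 630; 816; 741]; [:: 632; 815; 740]; [:: 633; 812; 742];
       [:: 635; 809; 743]; [:: 636; 807; 744]; [:: 639; 811; 737]; [:: 640; 808; 739];
       [:: 641; 810; 736]; [:: 643; 806; 738]; [:: 644; 783; 760]; [:: 646; 788; 753];
       [:: 647; 805; 735]; [:: 649; 804; 734]; [:: 650; 778; 759]; [:: 651; 803; 733];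
       [:: 652; 774; 761]; [:: 654; 801; 732]; [:: 655; 770; 762]; [:: 800; 658; 729];
       [:: 799; 660; 728]; [:: 798; 668; 721]; [:: 797; 670; 720]; [:: 796; 669; 722];
       [:: 795; 673; 719]; [:: 794; 677; 716]; [:: 793; 680; 714]; [:: 792; 682; 713];
       [:: 791; 681; 715]; [:: 789; 674; 724]; [:: 787; 689; 711]; [:: 786; 684; 717];
       [:: 785; 692; 710]; [:: 782; 697; 708]; [:: 781; 700; 706]; [:: 780; 695; 712];
       [:: 779; 703; 705]; [:: 777; 701; 709]; [:: 776; 704; 707]; [:: 775; 685; 727];
       [:: 773; 691; 723]; [:: 772; 690; 725]; [:: 771; 698; 718]; [:: 687; 769; 731];
       [:: 768; 693; 726]; [:: 694; 763; 730]; [:: 74; 80; 89]; [:: 60; 61; 122];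
       [:: 42; 93; 108]; [:: 34; 71; 138]; [:: 47; 59; 137]; [:: 29; 48; 166]; [:: 35; 49; 159];
       [:: 28; 36; 179]; [:: 78; 79; 86]; [:: 75; 83; 85]; [:: 118; 125]; [:: 38; 69; 136];
       [:: 40; 96; 107]; [:: 39; 94; 110]; [:: 55; 82; 106]; [:: 31; 99; 113]; [:: 56; 90; 97];
       [:: 104; 139]; [:: 52; 191]; [:: 116; 127]; [:: 32; 88; 123]; [:: 45; 77; 121];
       [:: 37; 44]],
   [:: (27, 1); (30, 1); (33, 1); (41, 1); (43, 1); (46, 1); (50, 2); (53, 2); (57, 2); (62, 7);
       (70, 1); (72, 2); (76, 1); (81, 1); (84, 1); (87, 1); (91, 2); (95, 1); (98, 1); (100, 4);
       (105, 1); (109, 1); (111, 2); (114, 2); (117, 1); (119, 2); (124, 1); (126, 1); (128, 8);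
       (140, 19); (160, 6); (167, 12); (180, 11); (192, 173)]);
  (839, 6, 6,
   [:: [:: 534; 839; 814]; [:: 554; 838; 795]; [:: 557; 837; 793]; [:: 565; 836; 786];
       [:: 567; 835; 785]; [:: 573; 834; 780]; [:: 574; 832; 781]; [:: 575; 833; 779];
       [:: 578; 831; 778]; [:: 580; 830; 777]; [:: 583; 829; 775]; [:: 588; 828; 771];
       [:: 591; 827; 769]; [:: 593; 826; 768]; [:: 596; 825; 766]; [:: 597; 823; 767];
       [:: 598; 824; 765]; [:: 600; 817; 770]; [:: 602; 822; 763]; [:: 606; 821; 760];
       [:: 612; 820; 755]; [:: 613; 818; 756]; [:: 614; 819; 754]; [:: 616; 813; 758];
       [:: 622; 816; 749]; [:: 628; 815; 744]; [:: 630; 812; 745]; [:: 632; 809; 746];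
       [:: 633; 811; 743]; [:: 634; 806; 747]; [:: 636; 810; 741]; [:: 639; 808; 740];
       [:: 641; 807; 739]; [:: 643; 802; 742]; [:: 648; 805; 734]; [:: 653; 804; 730];
       [:: 654; 801; 732]; [:: 803; 660; 724]; [:: 655; 799; 733]; [:: 800; 662; 725];
       [:: 798; 666; 723]; [:: 797; 668; 722]; [:: 796; 665; 726]; [:: 794; 674; 719];
       [:: 792; 667; 728]; [:: 791; 669; 727]; [:: 790; 683; 714]; [:: 789; 678; 720];
       [:: 788; 682; 717]; [:: 787; 691; 709]; [:: 671; 759; 757]; [:: 672; 764; 751];
       [:: 784; 696; 707]; [:: 783; 694; 710]; [:: 782; 701; 704]; [:: 776; 703; 708];
       [:: 774; 702; 711]; [:: 684; 772; 731]; [:: 773; 698; 716]; [:: 687; 752; 748];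
       [:: 688; 761; 738]; [:: 689; 762; 736]; [:: 699; 753; 735]; [:: 700; 750; 737]; [:: 729];
       [:: 40; 57; 146]; [:: 30; 62; 151]; [:: 18; 76; 149]; [:: 29; 101; 113]; [:: 25; 64; 154];
       [:: 51; 93; 99]; [:: 21; 81; 141]; [:: 13; 58; 172]; [:: 19; 86; 138]; [:: 42; 74; 127];
       [:: 31; 97; 115]; [:: 20; 28; 195]; [:: 12; 67; 164]; [:: 60; 88; 95]; [:: 22; 90; 131];
       [:: 7; 107; 129]; [:: 10; 116; 117]; [:: 33; 55; 155]; [:: 45; 75; 123]; [:: 47; 63; 133];
       [:: 38; 69; 136]; [:: 35; 46; 162]; [:: 15; 96; 132]; [:: 26; 61; 156]; [:: 27; 41; 175];
       [:: 9]],
   [:: (8, 1); (11, 1); (14, 1); (16, 2); (23, 2); (32, 1); (34, 1); (36, 2); (39, 1); (43, 2);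
       (48, 3); (52, 3); (56, 1); (59, 1); (65, 2); (68, 1); (70, 4); (77, 4); (82, 4); (87, 1);
       (89, 1); (91, 2); (94, 1); (98, 1); (100, 1); (102, 5); (108, 5); (114, 1); (118, 5);
       (124, 3); (128, 1); (130, 1); (134, 2); (137, 1); (139, 2); (142, 4); (147, 2); (150, 1);
       (152, 2); (157, 5); (163, 1); (165, 7); (173, 2); (176, 19); (196, 169)]);
  (842, 6, 5,
   [:: [:: 514; 842; 831]; [:: 515; 840; 832]; [:: 517; 841; 829]; [:: 525; 839; 823];
       [:: 545; 838; 804]; [:: 551; 837; 799]; [:: 561; 836; 790]; [:: 568; 835; 784];
       [:: 569; 833; 785]; [:: 580; 834; 773]; [:: 585; 830; 772]; [:: 589; 828; 770];
       [:: 594; 827; 766]; [:: 597; 826; 764]; [:: 599; 825; 763]; [:: 601; 824; 762];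
       [:: 602; 820; 765]; [:: 605; 822; 760]; [:: 607; 821; 759]; [:: 612; 819; 756];
       [:: 613; 817; 757]; [:: 615; 818; 754]; [:: 616; 816; 755]; [:: 620; 815; 752];
       [:: 621; 813; 753]; [:: 624; 814; 749]; [:: 627; 812; 748]; [:: 628; 809; 750];
       [:: 630; 811; 746]; [:: 631; 805; 751]; [:: 633; 810; 744]; [:: 636; 808; 743];
       [:: 637; 803; 747]; [:: 638; 807; 742]; [:: 640; 806; 741]; [:: 644; 798; 745];
       [:: 646; 802; 739]; [:: 648; 801; 738]; [:: 650; 800; 737]; [:: 652; 795; 740];
       [:: 653; 776; 758]; [:: 654; 797; 736]; [:: 796; 663; 728]; [:: 794; 669; 724];
       [:: 793; 673; 721]; [:: 792; 670; 725]; [:: 791; 674; 722]; [:: 789; 678; 720];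
       [:: 788; 676; 723]; [:: 787; 683; 717]; [:: 786; 686; 715]; [:: 783; 698; 706];
       [:: 782; 693; 712]; [:: 781; 701; 705]; [:: 780; 703; 704]; [:: 779; 700; 708];
       [:: 778; 702; 707]; [:: 680; 777; 730]; [:: 681; 774; 732]; [:: 775; 699; 713];
       [:: 771; 689; 727]; [:: 687; 767; 733]; [:: 769; 692; 726]; [:: 768; 690; 729];
       [:: 695; 761; 731]; [:: 718; 735; 734]; [:: 34; 81; 128]; [:: 29; 214]; [:: 31; 98; 114];
       [:: 43; 91; 109]; [:: 46; 96; 101]; [:: 36; 39; 168]; [:: 28; 93; 122]; [:: 8; 14; 59];
       [:: 48; 51; 144]; [:: 16; 23; 204]; [:: 55; 75; 113]; [:: 12; 99; 132]; [:: 56; 79; 108];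
       [:: 53; 60; 130]; [:: 9; 85; 149]; [:: 26; 77; 140]; [:: 49; 92; 102]; [:: 30; 89; 124];
       [:: 25; 40; 178]; [:: 83; 160]; [:: 21; 105; 117]; [:: 6; 76; 161]; [:: 11; 17; 215];
       [:: 22; 37; 184]; [:: 116; 127]; [:: 42; 66; 135]; [:: 7; 24; 212]; [:: 27]],
   [:: (10, 1); (13, 1); (15, 1); (18, 3); (32, 2); (35, 1); (38, 1); (41, 1); (44, 2); (47, 1);
       (50, 1); (52, 1); (54, 1); (57, 2); (61, 5); (67, 8); (78, 1); (80, 1); (82, 1); (84, 1);
       (86, 3); (90, 1); (94, 2); (97, 1); (100, 1); (103, 2); (106, 2); (110, 3); (115, 1);
       (118, 4); (123, 1); (125, 2); (129, 1); (131, 1); (133, 2); (136, 4); (141, 3); (145, 4);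
       (150, 10); (162, 6); (169, 9); (179, 5); (185, 19); (205, 7); (213, 1); (216, 149)])
]%num.
Definition in_window n :=
  (n %% 3 == 2) && has (fun t => (3 ^ t + 1 < n) && (n.*2 < 3 ^ t.+1 + 1)) (iota 0 7).

Lemma certificates_cover_window :
  all (fun n => in_window n ==> has (certificate_for n) certificates) (iota 0 845).
Proof. by vm_compute. Qed.

Lemma tail_splittable_small_window n :
  n < 845 -> n %% 3 = 2 -> (exists t, 3 ^ t + 1 < n /\ n.*2 < 3 ^ t.+1 + 1) ->
  tail_splittable n.
Proof.
move=> small n3 [t [lo hi]].
have t7 : t < 7 by rewrite -(ltn_exp2l _ _ (isT : 1 < 3)); lia.
have : in_window n.
  by rewrite /in_window n3 eqxx; apply/hasP; exists t; rewrite ?mem_iota ?lo.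
have : n \in iota 0 845 by rewrite mem_iota.
move/(allP certificates_cover_window)/implyP/[apply]/hasP => [[[[[n' t'] m] X] R] _].
by rewrite /certificate_for; case: ifP => // _; apply: tail_certificateP.
Qed.

Theorem theorem1 (n : nat) :
  0 < n ->
  ~ has_three_good_partition n ->
  (forall m, 0 < m -> m < n -> has_three_good_partition m) ->
  845 <= n /\
  n %% 3 = 2 /\
  exists t : nat, 4 <= t /\ 3 ^ t + 1 < n /\ n.*2 < 3 ^ t.+1 + 1.
Proof.
move=> n0 no_partition minimal.
have not_split : ~ tail_splittable n.
  by move/(three_good_partition_of_tail minimal).
have [n3 window] := tail_splittable_off_window n0 not_split.
have large : 845 <= n.
  rewrite leqNgt; apply/negP => small.
  exact: not_split (tail_splittable_small_window small n3 window).
split => //; split => //.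
case: window => t [lo hi]; exists t; split => //.
by rewrite -(leq_exp2l _ _ (isT : 1 < 3)); rewrite expnS in hi; lia.
Qed.
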